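(* For any $V>0$ and any $f\in\mathcal F$, writing $R=m^2+n^2+p^2+mp+np$, $T=mn(m+p)(n+p)$ and summing over $(m,n,p)\in\mathbb Z^3\setminus\{0\}$, the second derivatives of $E_f$ at the FCC lattice $D_3$ (parameters $(u,v,x,y,z)=(1,1,0,1/2,1/2)$) are $\partial_{uu}^2E_f[D_3]=\frac{C^2}{2}\sum R^2f''(CR)+2C\sum Rf'(CR)+6C^2\sum Tf''(CR)$; $\partial_{vv}^2E_f[D_3]=\frac56C^2\sum R^2f''(CR)+\frac83C\sum Rf'(CR)+\frac{14}{3}C^2\sum Tf''(CR)$; $\partial_{xx}^2E_f[D_3]=\frac{C^2}{3}\sum R^2f''(CR)+C\sum Rf'(CR)+\frac43C^2\sum Tf''(CR)$; $\partial_{yy}^2E_f[D_3]=\partial_{zz}^2E_f[D_3]=\frac23C^2\sum R^2f''(CR)+\frac43C\sum Rf'(CR)-\frac83C^2\sum Tf''(CR)$; $\partial_{uv}^2E_f[D_3]=-\frac{C^2}{2}\sum R^2f''(CR)-2C\sum Rf'(CR)-6C^2\sum Tf''(CR)$; $\partial_{xy}^2E_f[D_3]=-\frac{C^2}{3}\sum R^2f''(CR)-\frac{2C}{3}\sum Rf'(CR)+\frac{4C^2}{3}\sum Tf''(CR)$; and $\partial^2_{ux},\partial^2_{uy},\partial^2_{uz},\partial^2_{vx},\partial^2_{vy},\partial^2_{vz},\partial^2_{xz},\partial^2_{yz}$ of $E_f$ at $D_3$ all vanish.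
   Context: Fix $V>0$ and set $C:=V^{2/3}2^{1/3}$. Every Bravais lattice $L\subset\mathbb R^3$ of covolume $V$ is parametrized by $(u,v,x,y,z)$ with $u,v>0$ so that its quadratic form is $Q_L(m,n,p)=\frac{C}{u}\big[(m+xn+yp)^2+v^2(n+zp)^2+\frac{u^3}{2v^2}p^2\big]$. Let $\mathcal F$ be the set of $f\in C^2((0,\infty))$ such that for each $k\in\{0,1,2\}$, $|f^{(k)}(r)|=O(r^{-3/2-k-\eta_k})$ as $r\to\infty$ for some $\eta_k>0$. For $f\in\mathcal F$, $E_f(u,v,x,y,z):=\sum_{(m,n,p)\in\mathbb Z^3\setminus\{0\}} f(Q_L(m,n,p))$, a function of the five variables at fixed $V$. The FCC lattice $D_3$ of volume $V$ has parameters $(1,1,0,1/2,1/2)$, for which $Q_L=CR$. *)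

From Stdlib Require Import Reals ZArith List.
From Coquelicot Require Import Coquelicot.
Open Scope R_scope.

Definition zrange (N : nat) : list Z :=
  map (fun k => (Z.of_nat k - Z.of_nat N)%Z) (seq 0 (2 * N + 1)).

Definition box_sum (g : Z -> Z -> Z -> R) (N : nat) : R :=
  fold_right Rplus 0
    (map (fun m =>
      fold_right Rplus 0
        (map (fun n =>
          fold_right Rplus 0
            (map (fun p =>
               if (Z.eqb m 0 && Z.eqb n 0 && Z.eqb p 0)%bool then 0
               else g m n p) (zrange N))) (zrange N))) (zrange N)).

(* Lattice sum over Z^3 \ {0}, as the limit of the box partial sums
   (these sums are absolutely convergent in the statement). *)
Definition lattice_sum (g : Z -> Z -> Z -> R) : R :=
  real (Lim_seq (box_sum g)).

Definition Cvol (V : R) : R := Rpower V (2/3) * Rpower 2 (1/3).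

(* Quadratic form of the lattice with parameters (u,v,x,y,z) at covolume V. *)
Definition QL (V u v x y z : R) (m n p : Z) : R :=
  let m' := IZR m in let n' := IZR n in let p' := IZR p in
  Cvol V / u * ((m' + x * n' + y * p') ^ 2 + v ^ 2 * (n' + z * p') ^ 2
               + u ^ 3 / (2 * v ^ 2) * p' ^ 2).

Definition decay (g : R -> R) (k : nat) : Prop :=
  exists eta M r0 : R, 0 < eta /\ 0 < r0 /\
    forall r, r0 <= r -> Rabs (g r) <= M * Rpower r (- (3/2 + INR k + eta)).

Definition in_F (f : R -> R) : Prop :=
  (forall r, 0 < r ->
     ex_derive f r /\ ex_derive (Derive f) r /\
     continuous (Derive (Derive f)) r) /\
  decay f 0 /\ decay (Derive f) 1 /\ decay (Derive (Derive f)) 2.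

(* E_f as a function of the five parameters, indexed 0..4 = u,v,x,y,z. *)
Definition Ef (V : R) (f : R -> R) (a : nat -> R) : R :=
  lattice_sum (fun m n p => f (QL V (a 0%nat) (a 1%nat) (a 2%nat) (a 3%nat) (a 4%nat) m n p)).

Definition upd (a : nat -> R) (i : nat) (t : R) : nat -> R :=
  fun k => if Nat.eqb k i then t else a k.

(* second_partial F a i j val : the function  t |-> (d/ds F)(a with coord i := t)
   (derivative in coordinate j) is differentiable in t at a i with derivative val,
   i.e. d_i d_j F (a) = val. *)
Definition second_partial (F : (nat -> R) -> R) (a : nat -> R) (i j : nat) (val : R) : Prop :=
  is_derive (fun t => let b := upd a i t in Derive (fun s => F (upd b j s)) (b j)) (a i) val.

Definition D3pt : nat -> R :=
  fun k => match k with 0%nat => 1 | 1%nat => 1 | 2%nat => 0 | _ => 1/2 end.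

Definition Rq (m n p : Z) : R :=
  let m' := IZR m in let n' := IZR n in let p' := IZR p in
  m' ^ 2 + n' ^ 2 + p' ^ 2 + m' * p' + n' * p'.

Definition Tq (m n p : Z) : R :=
  let m' := IZR m in let n' := IZR n in let p' := IZR p in
  m' * n' * (m' + p') * (n' + p').

From Coquelicot Require Import Coquelicot.
From Stdlib Require Import Reals ZArith List Lra Lia Psatz FunctionalExtensionality Permutation.
From Stdlib Require FinFun.
Import ListNotations.
Open Scope R_scope.

(* Write [Q_a = C q_a], where [q_a] is the normalized quadratic form with parameters
   [a = (u, v, x, y, z)].  Near the FCC point [q_a(k) >= |k|^2 / 15] and all first and second
   parameter derivatives of [q_a] are [O(|k|^2)], so the decay of [f], [f'], [f''] makes the
   lattice sums of [f(Q_a)] and of its first and second parameter derivatives converge, as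
   limits of box sums, at a rate uniform in [a]; hence they may be differentiated term by term.
   At [D3] the Hessian entry [(i, j)] is the lattice sum of
   [C^2 d_i q d_j q f''(C R) + C d_i d_j q f'(C R)] with [R = q_D3].  Lattice sums of decaying
   functions are invariant under lattice automorphisms, and a group of twelve of them fixes both
   [R] and [T]; averaging over it turns [d_i q d_j q] into a combination of [R^2] and [T], and
   [d_i d_j q] into a multiple of [R], which yields the stated coefficients. *)

(** * Sums over finite lists of lattice points *)

Notation pt := (Z * Z * Z)%type.

Definition on_pt (g : Z -> Z -> Z -> R) (k : pt) : R := let '(m, n, p) := k in g m n p.

Definition psum (l : list pt) (h : pt -> R) : R := fold_right Rplus 0 (map h l).

Section ListSums.

Implicit Types (l : list pt) (h : pt -> R).

Lemma psum_nil h : psum [] h = 0.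
Proof. reflexivity. Qed.

Lemma psum_cons k l h : psum (k :: l) h = h k + psum l h.
Proof. reflexivity. Qed.

Lemma psum_ext l h1 h2 : (forall k, In k l -> h1 k = h2 k) -> psum l h1 = psum l h2.
Proof.
  induction l as [|k l IH]; intros H; [reflexivity|].
  rewrite !psum_cons, (H k (in_eq k l)), IH; [reflexivity|].
  intros; apply H, in_cons; assumption.
Qed.

Lemma psum_plus l h1 h2 : psum l (fun k => h1 k + h2 k) = psum l h1 + psum l h2.
Proof. induction l as [|k l IH]; [rewrite ?psum_nil; simpl; ring|]. rewrite !psum_cons, IH; ring. Qed.

Lemma psum_scal l c h : psum l (fun k => c * h k) = c * psum l h.
Proof. induction l as [|k l IH]; [rewrite ?psum_nil; simpl; ring|]. rewrite !psum_cons, IH; ring. Qed.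

Lemma psum_minus l h1 h2 : psum l (fun k => h1 k - h2 k) = psum l h1 - psum l h2.
Proof. induction l as [|k l IH]; [rewrite ?psum_nil; simpl; ring|]. rewrite !psum_cons, IH; ring. Qed.

Lemma psum_const l c : psum l (fun _ => c) = INR (length l) * c.
Proof.
  induction l as [|k l IH]; [rewrite psum_nil; simpl; ring|].
  rewrite psum_cons, IH, length_cons, S_INR; ring.
Qed.

Lemma psum_le l h1 h2 : (forall k, In k l -> h1 k <= h2 k) -> psum l h1 <= psum l h2.
Proof.
  induction l as [|k l IH]; intros H; [rewrite ?psum_nil; lra|].
  rewrite !psum_cons. apply Rplus_le_compat; [apply H, in_eq | apply IH].
  intros; apply H, in_cons; assumption.
Qed.

Lemma psum_abs l h : Rabs (psum l h) <= psum l (fun k => Rabs (h k)).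
Proof.
  induction l as [|k l IH]; [rewrite !psum_nil, Rabs_R0; lra|].
  rewrite !psum_cons. eapply Rle_trans; [apply Rabs_triang|]. lra.
Qed.

Lemma psum_map (A : pt -> pt) l h : psum (map A l) h = psum l (fun k => h (A k)).
Proof. unfold psum. rewrite map_map. reflexivity. Qed.

Lemma psum_filter (P : pt -> bool) l h :
  psum (filter P l) h = psum l (fun k => if P k then h k else 0).
Proof.
  induction l as [|k l IH]; [reflexivity|].
  rewrite psum_cons, <- IH. cbn [filter]. destruct (P k); rewrite ?psum_cons; ring.
Qed.

Lemma psum_perm norm1 l2 h : Permutation norm1 l2 -> psum norm1 h = psum l2 h.
Proof. induction 1; rewrite ?psum_cons; lra. Qed.

Lemma psum_derive l (H : R -> pt -> R) (H' : pt -> R) x :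
  (forall k, In k l -> is_derive (fun s => H s k) x (H' k)) ->
  is_derive (fun s => psum l (H s)) x (psum l H').
Proof.
  induction l as [|k l IH]; intros Hd; [exact (is_derive_const (0 : R) x)|].
  apply (is_derive_plus (fun s => H s k) (fun s => psum l (H s)));
    [apply Hd, in_eq | apply IH; intros; apply Hd, in_cons; assumption].
Qed.

Lemma psum_continuous l (H : R -> pt -> R) x :
  (forall k, In k l -> continuous (fun s => H s k) x) ->
  continuous (fun s => psum l (H s)) x.
Proof.
  induction l as [|k l IH]; intros Hc; [exact (continuous_const (0 : R) x)|].
  apply (continuous_plus (fun s => H s k) (fun s => psum l (H s)));
    [apply Hc, in_eq | apply IH; intros; apply Hc, in_cons; assumption].
Qed.

End ListSums.

Lemma fold_Rplus_app (norm1 l2 : list R) :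
  fold_right Rplus 0 (norm1 ++ l2) = fold_right Rplus 0 norm1 + fold_right Rplus 0 l2.
Proof. induction norm1 as [|x norm1 IH]; simpl; [ring|]. rewrite IH; ring. Qed.

Lemma fold_Rplus_list_prod {A B : Type} (norm1 : list A) (l2 : list B) (h : A * B -> R) :
  fold_right Rplus 0 (map h (list_prod norm1 l2)) =
  fold_right Rplus 0 (map (fun a => fold_right Rplus 0 (map (fun b => h (a, b)) l2)) norm1).
Proof.
  induction norm1 as [|a norm1 IH]; [reflexivity|].
  cbn [list_prod map fold_right]. rewrite map_app, fold_Rplus_app, IH, map_map. reflexivity.
Qed.

Lemma NoDup_list_prod {A B : Type} (norm1 : list A) (l2 : list B) :
  NoDup norm1 -> NoDup l2 -> NoDup (list_prod norm1 l2).
Proof.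
  intros H1 H2. induction H1 as [|a norm1 Ha _ IH]; [constructor|]. cbn [list_prod].
  apply NoDup_app; [apply FinFun.Injective_map_NoDup; [congruence|exact H2] | exact IH |].
  intros [a' b] Hin Hin'. apply in_map_iff in Hin as [b' [E _]]. injection E as <- _.
  apply in_prod_iff in Hin' as [Hl1 _]. contradiction.
Qed.

(** * Boxes and box sums *)

Lemma In_zrange N z : In z (zrange N) <-> (Z.abs z <= Z.of_nat N)%Z.
Proof.
  unfold zrange. rewrite in_map_iff. split.
  - intros [k [<- Hk]]. apply in_seq in Hk. lia.
  - intros Hz. exists (Z.to_nat (z + Z.of_nat N)). rewrite in_seq. lia.
Qed.

Lemma NoDup_zrange N : NoDup (zrange N).
Proof. apply FinFun.Injective_map_NoDup; [intros a b; lia | apply seq_NoDup]. Qed.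

Definition supnorm (k : pt) : Z := let '(m, n, p) := k in Z.max (Z.abs m) (Z.max (Z.abs n) (Z.abs p)).

Definition box (N : nat) : list pt := list_prod (list_prod (zrange N) (zrange N)) (zrange N).

Lemma In_box N k : In k (box N) <-> (supnorm k <= Z.of_nat N)%Z.
Proof. destruct k as [[m n] p]. unfold box. rewrite !in_prod_iff, !In_zrange. simpl. lia. Qed.

Lemma NoDup_box N : NoDup (box N).
Proof. apply NoDup_list_prod; [apply NoDup_list_prod|]; apply NoDup_zrange. Qed.

Lemma length_box N : INR (length (box N)) = INR (2 * N + 1) ^ 3.
Proof.
  unfold box, zrange. rewrite !length_prod, !length_map, length_seq, !mult_INR. ring.
Qed.

Lemma box_restrict_perm N M : (N <= M)%nat ->
  Permutation (filter (fun k => supnorm k <=? Z.of_nat N)%Z (box M)) (box N).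
Proof.
  intros H. apply NoDup_Permutation; [apply NoDup_filter, NoDup_box | apply NoDup_box |].
  intros k. rewrite filter_In, !In_box, Z.leb_le. lia.
Qed.

Lemma psum_box_restrict N M h : (N <= M)%nat ->
  psum (box M) (fun k => if (supnorm k <=? Z.of_nat N)%Z then h k else 0) = psum (box N) h.
Proof. intros H. rewrite <- psum_filter. apply psum_perm, box_restrict_perm, H. Qed.

Definition is_origin (k : pt) : bool :=
  let '(m, n, p) := k in ((m =? 0)%Z && (n =? 0)%Z && (p =? 0)%Z)%bool.

Lemma is_origin_spec k : is_origin k = true <-> k = (0, 0, 0)%Z.
Proof.
  destruct k as [[m n] p]. simpl. rewrite !Bool.andb_true_iff, !Z.eqb_eq.
  split; [intros [[-> ->] ->] | intros E; injection E]; auto.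
Qed.

Lemma supnorm_eq0 k : supnorm k = 0%Z <-> k = (0, 0, 0)%Z.
Proof.
  destruct k as [[m n] p]. simpl. split; [|intros E; injection E as -> -> ->; reflexivity].
  intros E. f_equal; [f_equal|]; lia.
Qed.

Definition punctured (g : Z -> Z -> Z -> R) (k : pt) : R := if is_origin k then 0 else on_pt g k.

Lemma box_sum_psum g N : box_sum g N = psum (box N) (punctured g).
Proof. unfold box_sum, psum, box. rewrite !fold_Rplus_list_prod. reflexivity. Qed.

Lemma box_sum_ext g1 g2 N : (forall m n p, is_origin (m, n, p) = false -> g1 m n p = g2 m n p) ->
  box_sum g1 N = box_sum g2 N.
Proof.
  intros E. rewrite !box_sum_psum. apply psum_ext. intros [[m n] p] _. unfold punctured.
  destruct (is_origin (m, n, p)) eqn:O; [reflexivity | apply E, O].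
Qed.

Definition sqnorm (m n p : Z) : R := IZR m ^ 2 + IZR n ^ 2 + IZR p ^ 2.

Lemma sqnorm_nonneg m n p : 0 <= sqnorm m n p.
Proof. unfold sqnorm. nra. Qed.

Lemma Rabs_pow2 x : Rabs x ^ 2 = x ^ 2.
Proof. rewrite <- !Rsqr_pow2. symmetry. apply Rsqr_abs. Qed.

Lemma sqnorm_ge_supnorm m n p : IZR (supnorm (m, n, p)) ^ 2 <= sqnorm m n p.
Proof.
  unfold sqnorm. rewrite <- (Rabs_pow2 (IZR m)), <- (Rabs_pow2 (IZR n)), <- (Rabs_pow2 (IZR p)), !Rabs_Zabs.
  pose proof (pow2_ge_0 (IZR (Z.abs m))). pose proof (pow2_ge_0 (IZR (Z.abs n))).
  pose proof (pow2_ge_0 (IZR (Z.abs p))).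
  assert (E : supnorm (m, n, p) = Z.abs m \/ supnorm (m, n, p) = Z.abs n \/
              supnorm (m, n, p) = Z.abs p) by (simpl; lia).
  destruct E as [E | [E | E]]; rewrite E; lra.
Qed.

Lemma sqnorm_ge1 m n p : is_origin (m, n, p) = false -> 1 <= sqnorm m n p.
Proof.
  intros O. unfold sqnorm.
  assert (Hz : forall z : Z, z <> 0%Z -> 1 <= IZR z ^ 2)
    by (intros z Hz; replace (IZR z ^ 2) with (IZR (z * z)) by (rewrite mult_IZR; ring);
        apply IZR_le; nia).
  destruct (Z.eq_dec m 0) as [-> | Hm]; [destruct (Z.eq_dec n 0) as [-> | Hn];
    [destruct (Z.eq_dec p 0) as [-> | Hp]|]|].
  - discriminate O.
  - pose proof (Hz p Hp). nra.
  - pose proof (Hz n Hn). nra.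
  - pose proof (Hz m Hm). nra.
Qed.

(** * Decay and convergence of box sums *)

Definition decay_bound (g : Z -> Z -> Z -> R) (c d : R) (N0 : nat) : Prop :=
  0 <= c /\ 0 < d /\ (1 <= N0)%nat /\
  forall k, (Z.of_nat N0 <= supnorm k)%Z -> Rabs (on_pt g k) <= c * Rpower (IZR (supnorm k)) (- (3 + d)).

Definition decaying (g : Z -> Z -> Z -> R) : Prop := exists c d N0, decay_bound g c d N0.

Lemma Rpower_pos x e : 0 < Rpower x e.
Proof. apply exp_pos. Qed.

Lemma Rpower_opp_le x y e : 0 < x -> x <= y -> 0 <= e -> Rpower y (- e) <= Rpower x (- e).
Proof.
  intros Hx Hxy He. rewrite !Rpower_Ropp.
  apply Rinv_le_contravar; [apply Rpower_pos | apply Rle_Rpower_l; lra].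
Qed.

Lemma Rpower_opp_step x d : 1 <= x -> 0 < d ->
  d * Rpower (x + 1) (- (1 + d)) <= Rpower x (- d) - Rpower (x + 1) (- d).
Proof.
  intros Hx Hd.
  destruct (MVT_cor2 (fun t => Rpower t (- d)) (fun t => - d * Rpower t (- d - 1)) x (x + 1))
    as [t [Ht [Hxt Htx]]]; [lra | intros t Ht; apply derivable_pt_lim_power; lra |].
  replace (Rpower x (- d) - Rpower (x + 1) (- d)) with (d * Rpower t (- (1 + d))) by
    (replace (- (1 + d)) with (- d - 1) by ring; lra).
  apply Rmult_le_compat_l; [lra | apply Rpower_opp_le; lra].
Qed.

Lemma Rpower_INR_vanishes K d eps : 0 < d -> 0 < eps ->
  exists N, forall n, (N <= n)%nat -> K * Rpower (INR n) (- d) < eps.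
Proof.
  intros Hd Heps. set (e := eps / (Rabs K + 1)).
  assert (He : 0 < e) by (apply Rdiv_lt_0_compat; [|pose proof (Rabs_pos K)]; lra).
  destruct (INR_unbounded (Rpower e (- / d))) as [N HN].
  exists N. intros n Hn.
  assert (Hr : Rpower (INR n) (- d) <= e).
  { apply Rle_trans with (Rpower (Rpower e (- / d)) (- d)).
    - apply Rpower_opp_le; [apply Rpower_pos | | lra].
      apply Rle_trans with (INR N); [lra | apply le_INR, Hn].
    - rewrite Rpower_mult. replace (- / d * - d) with 1 by (field; lra). rewrite Rpower_1 by lra. lra. }
  pose proof (Rpower_pos (INR n) (- d)). pose proof (Rabs_pos K).
  apply Rle_lt_trans with (Rabs K * e).
  - apply Rle_trans with (Rabs K * Rpower (INR n) (- d)); [apply Rmult_le_compat_r; [lra | apply Rle_abs]|].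
    apply Rmult_le_compat_l; lra.
  - unfold e. apply (Rmult_lt_reg_r (Rabs K + 1)); [lra|]. field_simplify; lra.
Qed.

Lemma box_sum_shell g c d N0 N : decay_bound g c d N0 -> (N0 <= S N)%nat ->
  Rabs (box_sum g (S N) - box_sum g N) <= 26 * c * Rpower (INR (S N)) (- (1 + d)).
Proof.
  intros [Hc [Hd [HN0 Hg]]] HN. set (x := INR (S N)).
  assert (Hx : 1 <= x) by (apply (le_INR 1); lia).
  set (B := c * Rpower x (- (3 + d))).
  assert (HB : 0 <= B) by (apply Rmult_le_pos; [lra | left; apply Rpower_pos]).
  rewrite !box_sum_psum, <- (psum_box_restrict N (S N) (punctured g)), <- psum_minus by lia.
  eapply Rle_trans; [apply psum_abs|].
  apply Rle_trans with
    (psum (box (S N)) (fun k => B - if (supnorm k <=? Z.of_nat N)%Z then B else 0)).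
  - apply psum_le. intros k Hk. apply In_box in Hk.
    destruct (supnorm k <=? Z.of_nat N)%Z eqn:E; [rewrite Rminus_diag, Rabs_R0; lra|].
    apply Z.leb_gt in E. rewrite Rminus_0_r, Rminus_0_r.
    unfold punctured. destruct (is_origin k); [rewrite Rabs_R0; lra|].
    replace B with (c * Rpower (IZR (supnorm k)) (- (3 + d)))
      by (unfold B, x; rewrite INR_IZR_INZ; do 3 f_equal; lia).
    apply Hg. lia.
  - rewrite psum_minus, psum_box_restrict, !psum_const, !length_box by lia.
    assert (Hsq : Rpower x (- (3 + d)) * x ^ 2 = Rpower x (- (1 + d))).
    { rewrite <- (Rpower_pow 2 x), <- Rpower_plus by lra. f_equal. simpl. ring. }
    replace (INR (2 * S N + 1) ^ 3 * B - INR (2 * N + 1) ^ 3 * B) with (B * (24 * x ^ 2 + 2))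
      by (unfold x; rewrite !plus_INR, !mult_INR, !S_INR; simpl; ring).
    rewrite <- Hsq.
    replace (26 * c * (Rpower x (- (3 + d)) * x ^ 2)) with (26 * B * x ^ 2) by (unfold B; ring).
    assert (1 <= x ^ 2) by nra. nra.
Qed.

Lemma box_sum_tail g c d N0 N M : decay_bound g c d N0 -> (N0 <= N)%nat -> (N <= M)%nat ->
  Rabs (box_sum g M - box_sum g N) <= 26 * c / d * Rpower (INR N) (- d).
Proof.
  intros Hg HN HM. pose proof Hg as [Hc [Hd [HN0 _]]].
  apply Rle_trans with (26 * c / d * (Rpower (INR N) (- d) - Rpower (INR M) (- d))).
  2:{ pose proof (Rpower_pos (INR M) (- d)).
      assert (0 <= 26 * c / d) by (apply Rdiv_le_0_compat; lra). nra. }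
  induction HM as [|M HM IH].
  - rewrite !Rminus_diag, Rabs_R0. lra.
  - replace (box_sum g (S M) - box_sum g N)
      with ((box_sum g (S M) - box_sum g M) + (box_sum g M - box_sum g N)) by ring.
    eapply Rle_trans; [apply Rabs_triang|].
    pose proof (box_sum_shell g c d N0 M Hg ltac:(lia)) as Hshell.
    pose proof (Rpower_opp_step (INR M) d ltac:(apply (le_INR 1); lia) Hd) as Hstep.
    rewrite <- S_INR in Hstep.
    assert (26 * c * Rpower (INR (S M)) (- (1 + d))
            <= 26 * c / d * (Rpower (INR M) (- d) - Rpower (INR (S M)) (- d))).
    { replace (26 * c * Rpower (INR (S M)) (- (1 + d)))
        with (26 * c / d * (d * Rpower (INR (S M)) (- (1 + d)))) by (field; lra).
      apply Rmult_le_compat_l; [apply Rdiv_le_0_compat|]; lra. }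
    lra.
Qed.

Lemma is_lim_seq_dist_le (u : nat -> R) (l a B : R) N :
  is_lim_seq u l -> (forall M, (N <= M)%nat -> Rabs (u M - a) <= B) -> Rabs (l - a) <= B.
Proof.
  intros Hu HB.
  assert (Hlim : is_lim_seq (fun M => Rabs (u M - a)) (Rabs (l - a))).
  { apply (is_lim_seq_abs _ (l - a)), is_lim_seq_minus'; [exact Hu | apply is_lim_seq_const]. }
  apply (is_lim_seq_le_loc _ _ _ _ (ex_intro _ N HB) Hlim (is_lim_seq_const B)).
Qed.

Lemma lattice_sum_rate g c d N0 : decay_bound g c d N0 ->
  is_lim_seq (box_sum g) (lattice_sum g) /\
  forall N, (N0 <= N)%nat -> Rabs (lattice_sum g - box_sum g N) <= 26 * c / d * Rpower (INR N) (- d).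
Proof.
  intros Hg. pose proof Hg as [Hc [Hd _]].
  assert (Hcauchy : ex_finite_lim_seq (box_sum g)).
  { apply ex_lim_seq_cauchy_corr. intros eps.
    destruct (Rpower_INR_vanishes (2 * (26 * c / d)) d eps Hd (cond_pos eps)) as [N1 HN1].
    exists (N0 + N1)%nat. intros n m Hn Hm.
    pose proof (box_sum_tail g c d N0 (N0 + N1) n Hg ltac:(lia) Hn) as Tn.
    pose proof (box_sum_tail g c d N0 (N0 + N1) m Hg ltac:(lia) Hm) as Tm.
    specialize (HN1 (N0 + N1)%nat ltac:(lia)).
    replace (box_sum g n - box_sum g m) with
      ((box_sum g n - box_sum g (N0 + N1)) - (box_sum g m - box_sum g (N0 + N1))) by ring.
    eapply Rle_lt_trans; [apply Rabs_triang|]. rewrite Rabs_Ropp. lra. }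
  destruct Hcauchy as [l Hl].
  replace (lattice_sum g) with l by (unfold lattice_sum; rewrite (is_lim_seq_unique _ _ Hl); reflexivity).
  split; [exact Hl|]. intros N HN.
  apply (is_lim_seq_dist_le _ _ _ _ N Hl). intros M HM. apply (box_sum_tail g c d N0); auto.
Qed.

Lemma lattice_sum_lim g : decaying g -> is_lim_seq (box_sum g) (lattice_sum g).
Proof. intros [c [d [N0 Hg]]]. apply (lattice_sum_rate g c d N0 Hg). Qed.

Lemma Rabs_le_vanishing x a d N0 : 0 < d ->
  (forall N, (N0 <= N)%nat -> Rabs x <= a * Rpower (INR N) (- d)) -> x = 0.
Proof.
  intros Hd Hx. destruct (Req_dec x 0) as [|Hne]; [assumption | exfalso].
  destruct (Rpower_INR_vanishes a d (Rabs x) Hd (Rabs_pos_lt x Hne)) as [N1 HN1].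
  specialize (HN1 (N0 + N1)%nat ltac:(lia)). specialize (Hx (N0 + N1)%nat ltac:(lia)). lra.
Qed.

Lemma box_sum_CVU (fn : nat -> R -> R) (G : R -> Z -> Z -> Z -> R) (D : R -> Prop) c d N0 :
  0 < d -> (forall x, D x -> decay_bound (G x) c d N0) ->
  (forall N x, D x -> fn N x = box_sum (G x) N) -> CVU_dom fn D.
Proof.
  intros Hd HG Hfn eps.
  destruct (Rpower_INR_vanishes (26 * c / d) d eps Hd (cond_pos eps)) as [N1 HN1].
  exists (N0 + N1)%nat. intros N HN x Hx.
  rewrite (Lim_seq_ext _ (box_sum (G x))) by (intros; apply Hfn, Hx). rewrite Hfn by exact Hx.
  change (Rabs (box_sum (G x) N - lattice_sum (G x)) < eps).
  rewrite Rabs_minus_sym. eapply Rle_lt_trans; [apply (lattice_sum_rate _ _ _ _ (HG x Hx)); lia|].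
  apply HN1. lia.
Qed.

Lemma decay_bound_ext g1 g2 c d N0 :
  (forall m n p, g1 m n p = g2 m n p) -> decay_bound g1 c d N0 -> decay_bound g2 c d N0.
Proof.
  intros E [Hc [Hd [HN Hg]]]. repeat split; auto.
  intros [[m n] p] Hk. simpl. rewrite <- E. apply (Hg (m, n, p) Hk).
Qed.

Lemma decay_bound_weaken g c d N0 c' d' N0' :
  decay_bound g c d N0 -> c <= c' -> 0 < d' <= d -> (N0 <= N0')%nat -> decay_bound g c' d' N0'.
Proof.
  intros [Hc [Hd [HN Hg]]] Hcc Hdd HNN. repeat split; try lra; try lia.
  intros k Hk. eapply Rle_trans; [apply Hg; lia|].
  assert (H1 : 1 <= IZR (supnorm k)) by (apply IZR_le; lia).
  apply Rmult_le_compat; try lra; [left; apply Rpower_pos | apply Rle_Rpower; lra].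
Qed.

Lemma decay_bound_plus g1 g2 c1 c2 d N1 N2 :
  decay_bound g1 c1 d N1 -> decay_bound g2 c2 d N2 ->
  decay_bound (fun m n p => g1 m n p + g2 m n p) (c1 + c2) d (Nat.max N1 N2).
Proof.
  intros [Hc1 [Hd [HN1 H1]]] [Hc2 [_ [HN2 H2]]]. repeat split; try lra; try lia.
  intros [[m n] p] Hk. specialize (H1 (m, n, p) ltac:(lia)). specialize (H2 (m, n, p) ltac:(lia)).
  simpl in *. eapply Rle_trans; [apply Rabs_triang | lra].
Qed.

Lemma decay_bound_scal g a c d N0 :
  decay_bound g c d N0 -> decay_bound (fun m n p => a * g m n p) (Rabs a * c) d N0.
Proof.
  intros [Hc [Hd [HN Hg]]]. repeat split; auto; [apply Rmult_le_pos; [apply Rabs_pos | lra]|].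
  intros [[m n] p] Hk. simpl. rewrite Rabs_mult, Rmult_assoc.
  apply Rmult_le_compat_l; [apply Rabs_pos | apply (Hg (m, n, p) Hk)].
Qed.

Lemma decay_bound_abs g c d N0 :
  decay_bound g c d N0 -> decay_bound (fun m n p => Rabs (g m n p)) c d N0.
Proof.
  intros [Hc [Hd [HN Hg]]]. repeat split; auto.
  intros [[m n] p] Hk. simpl. rewrite Rabs_Rabsolu. apply (Hg (m, n, p) Hk).
Qed.

Lemma decaying_ext g1 g2 : (forall m n p, g1 m n p = g2 m n p) -> decaying g1 -> decaying g2.
Proof. intros E [c [d [N0 H]]]. exists c, d, N0. eapply decay_bound_ext; eauto. Qed.

Lemma decaying_plus g1 g2 : decaying g1 -> decaying g2 -> decaying (fun m n p => g1 m n p + g2 m n p).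
Proof.
  intros [c1 [d1 [N1 H1]]] [c2 [d2 [N2 H2]]]. pose proof H1 as [_ [Hd1 _]]. pose proof H2 as [_ [Hd2 _]].
  exists (c1 + c2), (Rmin d1 d2), (Nat.max N1 N2).
  apply decay_bound_plus;
    (eapply decay_bound_weaken; [eassumption | lra | split; [apply Rmin_glb_lt; lra|] | lia]);
    [apply Rmin_l | apply Rmin_r].
Qed.

Lemma decaying_scal g a : decaying g -> decaying (fun m n p => a * g m n p).
Proof. intros [c [d [N0 H]]]. exists (Rabs a * c), d, N0. apply decay_bound_scal, H. Qed.

Lemma lattice_sum_ext g1 g2 : (forall m n p, is_origin (m, n, p) = false -> g1 m n p = g2 m n p) ->
  lattice_sum g1 = lattice_sum g2.
Proof. intros E. unfold lattice_sum. f_equal. apply Lim_seq_ext. intros N. apply box_sum_ext, E. Qed.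

Lemma lattice_sum_plus g1 g2 : decaying g1 -> decaying g2 ->
  lattice_sum (fun m n p => g1 m n p + g2 m n p) = lattice_sum g1 + lattice_sum g2.
Proof.
  intros H1 H2. apply lattice_sum_lim in H1, H2.
  assert (Hsum : is_lim_seq (box_sum (fun m n p => g1 m n p + g2 m n p)) (lattice_sum g1 + lattice_sum g2)).
  { eapply is_lim_seq_ext; [|apply (is_lim_seq_plus' _ _ _ _ H1 H2)].
    intros N. rewrite !box_sum_psum, <- psum_plus. apply psum_ext. intros k _.
    unfold punctured. destruct (is_origin k); [ring|]. destruct k as [[m n] p]. reflexivity. }
  unfold lattice_sum at 1. rewrite (is_lim_seq_unique _ _ Hsum). reflexivity.
Qed.

Lemma lattice_sum_scal g a : decaying g -> lattice_sum (fun m n p => a * g m n p) = a * lattice_sum g.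
Proof.
  intros H. apply lattice_sum_lim in H.
  assert (Hsc : is_lim_seq (box_sum (fun m n p => a * g m n p)) (a * lattice_sum g)).
  { eapply is_lim_seq_ext; [|apply (is_lim_seq_scal_l _ a _ H)].
    intros N. rewrite !box_sum_psum, <- psum_scal. apply psum_ext. intros k _.
    unfold punctured. destruct (is_origin k); [ring|]. destruct k as [[m n] p]. reflexivity. }
  unfold lattice_sum at 1. rewrite (is_lim_seq_unique _ _ Hsc). reflexivity.
Qed.

Section DecayOfComposition.

Variables (phi : R -> R) (e : nat) (M eta r0 : R).
Hypothesis Heta : 0 < eta.
Hypothesis Hr0 : 0 < r0.
Hypothesis Hphi : forall r, r0 <= r -> Rabs (phi r) <= M * Rpower r (- (3/2 + INR e + eta)).

Lemma decay_const_nonneg : 0 <= M.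
Proof.
  pose proof (Hphi r0 (Rle_refl r0)). pose proof (Rabs_pos (phi r0)).
  pose proof (Rpower_pos r0 (- (3/2 + INR e + eta))). nra.
Qed.

Lemma decay_bound_comp (Q P : Z -> Z -> Z -> R) lam K N0 :
  0 < lam -> 0 <= K -> (1 <= N0)%nat -> r0 <= lam * INR N0 ->
  (forall m n p, lam * sqnorm m n p <= Q m n p) -> (forall m n p, Rabs (P m n p) <= K * sqnorm m n p ^ e) ->
  decay_bound (fun m n p => P m n p * phi (Q m n p))
    (K * M * Rpower lam (- (3/2 + INR e + eta))) (2 * eta) N0.
Proof.
  intros Hlam HK HN0 HlamN HQ HP. pose proof decay_const_nonneg as HM.
  set (al := 3/2 + INR e + eta).
  repeat split; [repeat apply Rmult_le_pos; try lra; left; apply Rpower_pos | lra | exact HN0 |].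
  intros [[m n] p] Hk. cbn [on_pt].
  set (t := IZR (supnorm (m, n, p))). set (s := sqnorm m n p).
  assert (Ht : INR N0 <= t) by (unfold t; rewrite INR_IZR_INZ; apply IZR_le, Hk).
  assert (Ht1 : 1 <= INR N0) by (apply (le_INR 1), HN0).
  assert (Hts : t ^ 2 <= s) by apply sqnorm_ge_supnorm.
  assert (Hs : t <= s) by nra.
  assert (HQr : r0 <= Q m n p) by (apply Rle_trans with (lam * s); [nra | apply HQ]).
  assert (Hphi' : Rabs (phi (Q m n p)) <= M * (Rpower lam (- al) * Rpower s (- al))).
  { eapply Rle_trans; [apply Hphi, HQr|]. apply Rmult_le_compat_l; [lra|].
    rewrite Rpower_mult_distr by lra.
    apply Rpower_opp_le; [nra | apply HQ | unfold al; pose proof (pos_INR e); lra]. }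
  assert (E1 : s ^ e * Rpower s (- al) = Rpower s (- (3/2 + eta))).
  { rewrite <- (Rpower_pow e s), <- Rpower_plus by lra. f_equal. unfold al. ring. }
  assert (E2 : Rpower s (- (3/2 + eta)) <= Rpower t (- (3 + 2 * eta))).
  { apply Rle_trans with (Rpower (t ^ 2) (- (3/2 + eta))); [apply Rpower_opp_le; [nra | exact Hts | lra]|].
    right. rewrite <- (Rpower_pow 2 t), Rpower_mult by lra. f_equal. simpl. field. }
  rewrite Rabs_mult.
  pose proof (Rabs_pos (P m n p)). pose proof (Rabs_pos (phi (Q m n p))).
  pose proof (Rpower_pos lam (- al)). pose proof (Rpower_pos s (- al)).
  apply Rle_trans with ((K * s ^ e) * (M * (Rpower lam (- al) * Rpower s (- al)))).
  - apply Rmult_le_compat; auto.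
  - replace ((K * s ^ e) * (M * (Rpower lam (- al) * Rpower s (- al))))
      with (K * M * Rpower lam (- al) * (s ^ e * Rpower s (- al))) by ring.
    rewrite E1. apply Rmult_le_compat_l; [repeat apply Rmult_le_pos; lra | exact E2].
Qed.

End DecayOfComposition.

(** * Invariance under lattice automorphisms *)

Definition reindex (g : Z -> Z -> Z -> R) (A : pt -> pt) : Z -> Z -> Z -> R :=
  fun m n p => on_pt g (A (m, n, p)).

Lemma on_pt_reindex g A k : on_pt (reindex g A) k = on_pt g (A k).
Proof. destruct k as [[m n] p]. reflexivity. Qed.

Section Reindexing.

Variables (A B : pt -> pt) (K : nat).
Hypothesis BA : forall k, B (A k) = k.
Hypothesis AB : forall k, A (B k) = k.
Hypothesis A_lip : forall k, (supnorm (A k) <= Z.of_nat K * supnorm k)%Z.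
Hypothesis B_lip : forall k, (supnorm (B k) <= Z.of_nat K * supnorm k)%Z.
Hypothesis K_pos : (1 <= K)%nat.

Lemma is_origin_reindex k : is_origin (A k) = is_origin k.
Proof.
  assert (A0 : A (0, 0, 0)%Z = (0, 0, 0)%Z).
  { apply supnorm_eq0. pose proof (A_lip (0, 0, 0)%Z).
    simpl in *. destruct (A _) as [[m n] p]. simpl in *. lia. }
  destruct (is_origin k) eqn:E.
  - apply is_origin_spec in E. subst k. rewrite A0. reflexivity.
  - destruct (is_origin (A k)) eqn:E'; [|reflexivity].
    apply is_origin_spec in E'. rewrite <- E, <- (BA k), E', <- A0, BA. reflexivity.
Qed.

Lemma box_sum_reindex g N :
  box_sum (reindex g A) N =
  psum (box (K * N)) (fun k => if (supnorm (B k) <=? Z.of_nat N)%Z then punctured g k else 0).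
Proof.
  rewrite box_sum_psum, <- psum_filter.
  transitivity (psum (map A (box N)) (punctured g)).
  - rewrite psum_map. apply psum_ext. intros [[m n] p] _.
    unfold punctured. rewrite is_origin_reindex. reflexivity.
  - apply psum_perm, NoDup_Permutation.
    + apply FinFun.Injective_map_NoDup; [|apply NoDup_box].
      intros j k E. rewrite <- (BA j), E, BA. reflexivity.
    + apply NoDup_filter, NoDup_box.
    + intros k. rewrite in_map_iff, filter_In, In_box, Z.leb_le. split.
      * intros [j [<- Hj]]. apply In_box in Hj. rewrite BA. pose proof (A_lip j). split; [nia | lia].
      * intros [_ Hk]. exists (B k). rewrite AB, In_box. auto.
Qed.

Lemma decay_bound_reindex g c d N0 :
  decay_bound g c d N0 -> decay_bound (reindex g A) (c * Rpower (INR K) (3 + d)) d (K * N0).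
Proof.
  intros [Hc [Hd [HN Hg]]]. repeat split; auto; [apply Rmult_le_pos; [lra | left; apply Rpower_pos] | lia|].
  intros k Hk. rewrite on_pt_reindex.
  assert (Hkk : (supnorm k <= Z.of_nat K * supnorm (A k))%Z) by (rewrite <- (BA k) at 1; apply B_lip).
  assert (HKpos : 0 < INR K) by (apply (lt_INR 0); lia).
  assert (HAk : (Z.of_nat N0 <= supnorm (A k))%Z).
  { apply (Z.mul_le_mono_pos_l _ _ (Z.of_nat K)); lia. }
  eapply Rle_trans; [apply Hg, HAk|].
  rewrite Rmult_assoc. apply Rmult_le_compat_l; [lra|].
  apply Rle_trans with (Rpower (IZR (supnorm k) / INR K) (- (3 + d))).
  - apply Rpower_opp_le; [|apply (Rmult_le_reg_l (INR K)); [lra|] | lra].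
    + apply Rdiv_lt_0_compat; [apply IZR_lt; lia | lra].
    + rewrite INR_IZR_INZ, <- mult_IZR. field_simplify; [apply IZR_le; lia|].
      rewrite <- INR_IZR_INZ. lra.
  - right. unfold Rdiv.
    rewrite <- Rpower_mult_distr by (try apply IZR_lt; try apply Rinv_0_lt_compat; lia || lra).
    rewrite Rmult_comm. f_equal. unfold Rpower. rewrite ln_Rinv by lra. f_equal. ring.
Qed.

(* Points of the big box whose preimage leaves the box of size [K N] lie outside the box of size [N]. *)
Lemma box_sum_reindex_error g c d N0 N : decay_bound g c d N0 -> (N0 <= N)%nat ->
  Rabs (box_sum (reindex g A) (K * N) - box_sum g (K * (K * N))) <= 26 * c / d * Rpower (INR N) (- d).
Proof.
  intros Hg HN.
  assert (HKN : (N <= K * N)%nat) by nia. assert (HKKN : (K * N <= K * (K * N))%nat) by nia.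
  eapply Rle_trans; [|apply (box_sum_tail _ c d N0 N (K * (K * N)) (decay_bound_abs g c d N0 Hg) HN); lia].
  rewrite box_sum_reindex, (box_sum_psum g), <- psum_minus.
  eapply Rle_trans; [apply psum_abs|].
  rewrite !box_sum_psum, <- (psum_box_restrict N (K * (K * N))), <- psum_minus by lia.
  eapply Rle_trans; [|apply Rle_abs]. apply psum_le.
  intros k _. pose proof (B_lip k) as Hk.
  destruct (supnorm (B k) <=? Z.of_nat (K * N))%Z eqn:E1; destruct (supnorm k <=? Z.of_nat N)%Z eqn:E2;
    [| | rewrite Z.leb_gt in E1; rewrite Z.leb_le in E2; nia |];
    unfold punctured; destruct (is_origin k); destruct k as [[m n] p]; cbn [on_pt];
    rewrite ?Rminus_diag, ?Rminus_0_r, ?Rminus_0_l, ?Rabs_Ropp, ?Rabs_R0;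
    pose proof (Rabs_pos (g m n p)); lra.
Qed.

Lemma lattice_sum_reindex g : decaying g ->
  decaying (reindex g A) /\ lattice_sum (reindex g A) = lattice_sum g.
Proof.
  intros [c [d [N0 Hg]]]. pose proof Hg as [Hc [Hd [HN0 _]]].
  pose proof (decay_bound_reindex g c d N0 Hg) as HgA.
  set (c' := c * Rpower (INR K) (3 + d)) in HgA.
  split; [exists c', d, (K * N0)%nat; exact HgA|].
  assert (Hc' : 0 <= 26 * c' / d) by (destruct HgA as [? _]; apply Rdiv_le_0_compat; lra).
  apply Rminus_diag_uniq, (Rabs_le_vanishing _ (26 * c' / d + 26 * c / d + 26 * c / d) d N0 Hd).
  intros N HN.
  assert (HKN : (N <= K * N)%nat) by nia. assert (HKKN : (K * N <= K * (K * N))%nat) by nia.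
  assert (Hmono : forall M, (N <= M)%nat -> Rpower (INR M) (- d) <= Rpower (INR N) (- d))
    by (intros M HM; apply Rpower_opp_le; [apply (lt_INR 0); lia | apply le_INR, HM | lra]).
  assert (H1 : Rabs (lattice_sum (reindex g A) - box_sum (reindex g A) (K * N))
               <= 26 * c' / d * Rpower (INR N) (- d)).
  { eapply Rle_trans; [apply (lattice_sum_rate _ _ _ _ HgA); nia|].
    apply Rmult_le_compat_l; [exact Hc' | apply Hmono; lia]. }
  assert (H3 : Rabs (lattice_sum g - box_sum g (K * (K * N))) <= 26 * c / d * Rpower (INR N) (- d)).
  { eapply Rle_trans; [apply (lattice_sum_rate _ _ _ _ Hg); lia|].
    apply Rmult_le_compat_l; [apply Rdiv_le_0_compat; lra | apply Hmono; lia]. }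
  pose proof (box_sum_reindex_error g c d N0 N Hg HN) as H2.
  replace (lattice_sum (reindex g A) - lattice_sum g) with
    ((lattice_sum (reindex g A) - box_sum (reindex g A) (K * N))
     + (box_sum (reindex g A) (K * N) - box_sum g (K * (K * N)))
     - (lattice_sum g - box_sum g (K * (K * N)))) by ring.
  eapply Rle_trans; [apply Rabs_triang|]. rewrite Rabs_Ropp.
  eapply Rle_trans; [apply Rplus_le_compat_r, Rabs_triang|]. lra.
Qed.

End Reindexing.

Definition lattice_automorphism (A : pt -> pt) : Prop :=
  exists (B : pt -> pt) (K : nat), (1 <= K)%nat /\
    (forall k, B (A k) = k) /\ (forall k, A (B k) = k) /\
    (forall k, supnorm (A k) <= Z.of_nat K * supnorm k)%Z /\
    (forall k, supnorm (B k) <= Z.of_nat K * supnorm k)%Z.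

Lemma lattice_sum_automorphism A g : lattice_automorphism A -> decaying g ->
  decaying (reindex g A) /\ lattice_sum (reindex g A) = lattice_sum g.
Proof. intros (B & K & HK & BA & AB & HA & HB). apply (lattice_sum_reindex A B K); assumption. Qed.

Definition orbit_sum (G : list (pt -> pt)) (g : Z -> Z -> Z -> R) : Z -> Z -> Z -> R :=
  fun m n p => fold_right Rplus 0 (map (fun A => reindex g A m n p) G).

Lemma lattice_sum_orbit_sum G g : Forall lattice_automorphism G -> decaying g ->
  decaying (orbit_sum G g) /\ lattice_sum (orbit_sum G g) = INR (length G) * lattice_sum g.
Proof.
  intros HG Hg. induction HG as [|A G HA _ [IHdec IHsum]].
  - assert (H0 : forall m n p, 0 * g m n p = orbit_sum [] g m n p)
      by (intros; unfold orbit_sum; simpl; ring).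
    split; [eapply decaying_ext; [exact H0 | apply decaying_scal, Hg]|].
    rewrite <- (lattice_sum_ext (fun m n p => 0 * g m n p)) by auto.
    rewrite lattice_sum_scal by exact Hg. simpl. ring.
  - destruct (lattice_sum_automorphism A g HA Hg) as [HAdec HAsum].
    change (orbit_sum (A :: G) g) with (fun m n p => reindex g A m n p + orbit_sum G g m n p).
    split; [apply decaying_plus; assumption|].
    rewrite lattice_sum_plus, HAsum, IHsum by assumption. rewrite length_cons, S_INR. ring.
Qed.

Lemma orbit_sum_mult G (Q P : Z -> Z -> Z -> R) (h : R -> R) :
  Forall (fun A => forall k, on_pt Q (A k) = on_pt Q k) G ->
  forall m n p, orbit_sum G (fun m n p => P m n p * h (Q m n p)) m n p =
                orbit_sum G P m n p * h (Q m n p).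
Proof.
  intros HG m n p. induction HG as [|A G HA _ IH]; unfold orbit_sum in *; simpl; [ring|].
  rewrite IH. unfold reindex. specialize (HA (m, n, p)).
  destruct (A (m, n, p)) as [[a b] c]. simpl in *. rewrite HA. ring.
Qed.

Lemma lattice_sum_orbit_average G (Q P : Z -> Z -> Z -> R) (h : R -> R) :
  Forall lattice_automorphism G -> Forall (fun A => forall k, on_pt Q (A k) = on_pt Q k) G ->
  G <> [] -> decaying (fun m n p => P m n p * h (Q m n p)) ->
  lattice_sum (fun m n p => P m n p * h (Q m n p)) =
  lattice_sum (fun m n p => / INR (length G) * orbit_sum G P m n p * h (Q m n p)).
Proof.
  intros Haut HQ Hne Hdec.
  assert (Hlen : INR (length G) <> 0)
    by (destruct G; [congruence | rewrite length_cons, S_INR; pose proof (pos_INR (length G)); lra]).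
  destruct (lattice_sum_orbit_sum G _ Haut Hdec) as [Hodec Hosum].
  transitivity (/ INR (length G) * lattice_sum (orbit_sum G (fun m n p => P m n p * h (Q m n p)))).
  - rewrite Hosum. field. exact Hlen.
  - rewrite <- lattice_sum_scal by exact Hodec. apply lattice_sum_ext. intros m n p _.
    rewrite orbit_sum_mult by exact HQ. ring.
Qed.

(** * Term-by-term differentiation *)

Lemma is_derive_box_sum (G G' : R -> Z -> Z -> Z -> R) x N :
  (forall m n p, is_origin (m, n, p) = false -> is_derive (fun s => G s m n p) x (G' x m n p)) ->
  is_derive (fun s => box_sum (G s) N) x (box_sum (G' x) N).
Proof.
  intros HG. apply (is_derive_ext (fun s => psum (box N) (punctured (G s)))).
  { intros; symmetry; apply box_sum_psum. }
  rewrite box_sum_psum. apply psum_derive. intros [[m n] p] _. unfold punctured.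
  destruct (is_origin (m, n, p)) eqn:O; [exact (is_derive_const (0 : R) x) | apply HG, O].
Qed.

Lemma continuous_box_sum (G : R -> Z -> Z -> Z -> R) x N :
  (forall m n p, is_origin (m, n, p) = false -> continuous (fun s => G s m n p) x) ->
  continuous (fun s => box_sum (G s) N) x.
Proof.
  intros HG. apply (continuous_ext (fun s => psum (box N) (punctured (G s)))).
  { intros; symmetry; apply box_sum_psum. }
  apply psum_continuous. intros [[m n] p] _. unfold punctured.
  destruct (is_origin (m, n, p)) eqn:O; [exact (continuous_const (0 : R) x) | apply HG, O].
Qed.

Section TermwiseDerivative.

Variables (G G' : R -> Z -> Z -> Z -> R) (lo hi : R) (c d c' d' : R) (N0 N0' : nat).
Hypothesis G_decay : forall s, lo < s < hi -> decay_bound (G s) c d N0.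
Hypothesis G'_decay : forall s, lo < s < hi -> decay_bound (G' s) c' d' N0'.
Hypothesis G_derive : forall s m n p, lo < s < hi -> is_origin (m, n, p) = false ->
  is_derive (fun t => G t m n p) s (G' s m n p).
Hypothesis G'_continuous : forall s m n p, lo < s < hi -> is_origin (m, n, p) = false ->
  continuous (fun t => G' t m n p) s.

Lemma is_derive_lattice_sum x : lo < x < hi ->
  is_derive (fun s => lattice_sum (G s)) x (lattice_sum (G' x)).
Proof.
  intros Hx. set (I := fun s => lo < s < hi). change (I x) in Hx.
  pose proof (G_decay x Hx) as [_ [Hd _]]. pose proof (G'_decay x Hx) as [_ [Hd' _]].
  set (fn := fun N s => box_sum (G s) N).
  assert (Hopen : open I) by (apply open_and; [apply open_gt | apply open_lt]).
  assert (Hfn : forall N s, I s -> is_derive (fn N) s (box_sum (G' s) N))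
    by (intros N s Hs; apply is_derive_box_sum; intros; apply G_derive; assumption).
  assert (HD : forall N s, I s -> Derive (fn N) s = box_sum (G' s) N)
    by (intros; apply is_derive_unique, Hfn; assumption).
  pose proof (CVU_Derive fn I Hopen) as Hcvu.
  specialize (Hcvu ltac:(intros a b y Ha Hb Hy; unfold I in *; lra)).
  specialize (Hcvu ltac:(apply (box_sum_CVU fn G I c d N0); auto)).
  specialize (Hcvu ltac:(intros N s Hs; eexists; apply Hfn, Hs)).
  assert (Hcont : forall N s, I s -> continuity_pt (Derive (fn N)) s).
  { intros N s Hs. apply (continuity_pt_ext_loc (fun y => box_sum (G' y) N)).
    - apply (locally_open I _ Hopen); [|exact Hs]. intros y Hy. symmetry. apply HD, Hy.
    - apply continuity_pt_filterlim, continuous_box_sum. intros; apply G'_continuous; assumption. }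
  specialize (Hcvu Hcont ltac:(apply (box_sum_CVU _ G' I c' d' N0'); auto) x Hx).
  rewrite (Lim_seq_ext _ (box_sum (G' x))) in Hcvu by (intros; apply HD, Hx).
  exact Hcvu.
Qed.

End TermwiseDerivative.

(** * The normalized quadratic form near the FCC point *)

Definition near_D3 (a : nat -> R) : Prop := forall j, (j < 5)%nat -> Rabs (a j - D3pt j) < 1/10.

Lemma near_D3_bounds a : near_D3 a ->
  9/10 < a 0%nat < 11/10 /\ 9/10 < a 1%nat < 11/10 /\ -1/10 < a 2%nat < 1/10 /\
  2/5 < a 3%nat < 3/5 /\ 2/5 < a 4%nat < 3/5.
Proof.
  intros H.
  assert (B : forall j, (j < 5)%nat -> D3pt j - 1/10 < a j < D3pt j + 1/10).
  { intros j Hj. specialize (H j Hj). apply Rabs_def2 in H. lra. }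
  pose proof (B 0%nat ltac:(lia)); pose proof (B 1%nat ltac:(lia)); pose proof (B 2%nat ltac:(lia));
  pose proof (B 3%nat ltac:(lia)); pose proof (B 4%nat ltac:(lia)); cbn [D3pt] in *. lra.
Qed.

Lemma upd_same (b : nat -> R) j : upd b j (b j) = b.
Proof.
  apply functional_extensionality. intros k. unfold upd.
  destruct (Nat.eqb_spec k j); [subst|]; reflexivity.
Qed.

Lemma upd_upd (b : nat -> R) j t s : upd (upd b j t) j s = upd b j s.
Proof. apply functional_extensionality. intros k. unfold upd. destruct (Nat.eqb k j); reflexivity. Qed.

Lemma upd_eq (b : nat -> R) j s : upd b j s j = s.
Proof. unfold upd. rewrite Nat.eqb_refl. reflexivity. Qed.

Lemma near_D3_upd b j s : near_D3 b -> Rabs (s - D3pt j) < 1/10 -> near_D3 (upd b j s).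
Proof. intros Hb Hs k Hk. unfold upd. destruct (Nat.eqb_spec k j); [subst; exact Hs | apply Hb, Hk]. Qed.

Lemma near_D3_D3pt : near_D3 D3pt.
Proof. intros j _. rewrite Rminus_diag, Rabs_R0. lra. Qed.

Lemma near_D3_nonzero a : near_D3 a -> a 0%nat <> 0 /\ a 1%nat <> 0.
Proof. intros Ha. pose proof (near_D3_bounds a Ha). split; lra. Qed.

Definition norm1 (m n p : Z) : R := Rabs (IZR m) + Rabs (IZR n) + Rabs (IZR p).

Lemma norm1_sqnorm m n p : norm1 m n p ^ 2 <= 3 * sqnorm m n p.
Proof.
  unfold norm1, sqnorm. rewrite <- (Rabs_pow2 (IZR m)), <- (Rabs_pow2 (IZR n)), <- (Rabs_pow2 (IZR p)).
  pose proof (pow2_ge_0 (Rabs (IZR m) - Rabs (IZR n))).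
  pose proof (pow2_ge_0 (Rabs (IZR n) - Rabs (IZR p))).
  pose proof (pow2_ge_0 (Rabs (IZR m) - Rabs (IZR p))). nra.
Qed.

Definition linA (a : nat -> R) (m n p : Z) : R := IZR m + a 2%nat * IZR n + a 3%nat * IZR p.
Definition linB (a : nat -> R) (m n p : Z) : R := IZR n + a 4%nat * IZR p.

Definition qform (a : nat -> R) (m n p : Z) : R :=
  / a 0%nat * (linA a m n p ^ 2 + a 1%nat ^ 2 * linB a m n p ^ 2
               + a 0%nat ^ 3 / (2 * a 1%nat ^ 2) * IZR p ^ 2).

Lemma QL_qform V a m n p :
  QL V (a 0%nat) (a 1%nat) (a 2%nat) (a 3%nat) (a 4%nat) m n p = Cvol V * qform a m n p.
Proof. unfold QL, qform, linA, linB. cbv zeta. unfold Rdiv. ring. Qed.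

Lemma linA_bound a m n p : near_D3 a -> Rabs (linA a m n p) <= norm1 m n p.
Proof.
  intros Ha. pose proof (near_D3_bounds a Ha) as (_ & _ & Hx & Hy & _). unfold linA, norm1.
  eapply Rle_trans; [apply Rabs_triang|]. eapply Rle_trans; [apply Rplus_le_compat_r, Rabs_triang|].
  rewrite !Rabs_mult.
  assert (Rabs (a 2%nat) <= 1) by (apply Rabs_le; lra).
  assert (Rabs (a 3%nat) <= 1) by (apply Rabs_le; lra).
  pose proof (Rabs_pos (IZR n)). pose proof (Rabs_pos (IZR p)). nra.
Qed.

Lemma linB_bound a m n p : near_D3 a -> Rabs (linB a m n p) <= norm1 m n p.
Proof.
  intros Ha. pose proof (near_D3_bounds a Ha) as (_ & _ & _ & _ & Hz). unfold linB, norm1.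
  eapply Rle_trans; [apply Rabs_triang|]. rewrite Rabs_mult.
  assert (Rabs (a 4%nat) <= 1) by (apply Rabs_le; lra).
  pose proof (Rabs_pos (IZR m)). pose proof (Rabs_pos (IZR p)). nra.
Qed.

Lemma Rabs_n_le_norm1 m n p : Rabs (IZR n) <= norm1 m n p.
Proof. unfold norm1. pose proof (Rabs_pos (IZR m)). pose proof (Rabs_pos (IZR p)). lra. Qed.

Lemma Rabs_p_le_norm1 m n p : Rabs (IZR p) <= norm1 m n p.
Proof. unfold norm1. pose proof (Rabs_pos (IZR m)). pose proof (Rabs_pos (IZR n)). lra. Qed.

(* Derivatives of [qform] in [u = a 0] and [v = a 1] are written with coefficients
   [c u^e1 v^e2 / (u^e3 v^e4)], which are bounded uniformly near [D3pt]. *)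
Definition uv_mono (a : nat -> R) (c : R) (e1 e2 e3 e4 : nat) : R :=
  c * a 0%nat ^ e1 * a 1%nat ^ e2 / (a 0%nat ^ e3 * a 1%nat ^ e4).

Lemma uv_mono_bound a c e1 e2 e3 e4 : near_D3 a -> Rabs c <= 4 -> (e1 + e2 + e3 + e4 <= 6)%nat ->
  Rabs (uv_mono a c e1 e2 e3 e4) <= 8.
Proof.
  intros Ha Hc He. pose proof (near_D3_bounds a Ha) as ([Hu1 Hu2] & [Hv1 Hv2] & _).
  set (u := a 0%nat) in *. set (v := a 1%nat) in *. set (r := 10/9).
  assert (Hpow : forall x e, 0 <= x <= r -> 0 <= x ^ e <= r ^ e)
    by (intros x e Hx; split; [apply pow_le | apply pow_incr]; lra).
  assert (Hinv : forall x, 9/10 < x < 11/10 -> 0 <= x <= r /\ 0 <= / x <= r).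
  { intros x Hx. unfold r. repeat split; try lra; [left; apply Rinv_0_lt_compat; lra|].
    apply Rle_trans with (/ (9/10)); [apply Rinv_le_contravar|]; lra. }
  destruct (Hinv u (conj Hu1 Hu2)) as [Hu Hiu], (Hinv v (conj Hv1 Hv2)) as [Hv Hiv].
  assert (E : uv_mono a c e1 e2 e3 e4 = c * (u ^ e1 * v ^ e2 * (/ u) ^ e3 * (/ v) ^ e4))
    by (unfold uv_mono, Rdiv; rewrite Rinv_mult, !pow_inv; fold u v; ring).
  destruct (Hpow u e1 Hu), (Hpow v e2 Hv), (Hpow _ e3 Hiu), (Hpow _ e4 Hiv).
  assert (Hprod : 0 <= u ^ e1 * v ^ e2 * (/ u) ^ e3 * (/ v) ^ e4 <= r ^ 6).
  { split; [repeat apply Rmult_le_pos; assumption|].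
    apply Rle_trans with (r ^ e1 * r ^ e2 * r ^ e3 * r ^ e4).
    - repeat apply Rmult_le_compat; try assumption; repeat apply Rmult_le_pos; assumption.
    - rewrite <- !pow_add. apply Rle_pow; [unfold r; lra | exact He]. }
  rewrite E, Rabs_mult, (Rabs_pos_eq (_ * _)) by apply Hprod.
  assert (r ^ 6 <= 2) by (unfold r; simpl; lra).
  apply Rle_trans with (4 * 2); [apply Rmult_le_compat; try apply Rabs_pos; lra | lra].
Qed.

Lemma uv_term_bound a c e1 e2 e3 e4 X Y m n p : near_D3 a -> Rabs c <= 4 ->
  (e1 + e2 + e3 + e4 <= 6)%nat -> Rabs X <= norm1 m n p -> Rabs Y <= norm1 m n p ->
  Rabs (uv_mono a c e1 e2 e3 e4 * X * Y) <= 24 * sqnorm m n p.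
Proof.
  intros Ha Hc He HX HY. pose proof (uv_mono_bound a c e1 e2 e3 e4 Ha Hc He).
  pose proof (norm1_sqnorm m n p). rewrite !Rabs_mult.
  pose proof (Rabs_pos X). pose proof (Rabs_pos Y). pose proof (Rabs_pos (uv_mono a c e1 e2 e3 e4)).
  apply Rle_trans with (8 * norm1 m n p ^ 2); [|lra].
  replace (8 * norm1 m n p ^ 2) with (8 * norm1 m n p * norm1 m n p) by ring.
  apply Rmult_le_compat; try apply Rmult_le_compat; try apply Rmult_le_pos; lra.
Qed.

Definition dqform (j : nat) (a : nat -> R) (m n p : Z) : R :=
  let A := linA a m n p in let B := linB a m n p in let N := IZR n in let P := IZR p in
  match j with
  | 0 => uv_mono a (-1) 0 0 2 0 * A * A + uv_mono a (-1) 0 2 2 0 * B * B + uv_mono a 1 1 0 0 2 * P * P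
  | 1 => uv_mono a 2 0 1 1 0 * B * B + uv_mono a (-1) 2 0 0 3 * P * P
  | 2 => uv_mono a 2 0 0 1 0 * A * N
  | 3 => uv_mono a 2 0 0 1 0 * A * P
  | 4 => uv_mono a 2 0 2 1 0 * B * P
  | _ => 0
  end.

Definition d2qform (i j : nat) (a : nat -> R) (m n p : Z) : R :=
  let A := linA a m n p in let B := linB a m n p in let N := IZR n in let P := IZR p in
  match i, j with
  | 0, 0 => uv_mono a 2 0 0 3 0 * A * A + uv_mono a 2 0 2 3 0 * B * B + uv_mono a 1 0 0 0 2 * P * P
  | 0, 1 | 1, 0 => uv_mono a (-2) 0 1 2 0 * B * B + uv_mono a (-2) 1 0 0 3 * P * P
  | 0, 2 | 2, 0 => uv_mono a (-2) 0 0 2 0 * A * N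
  | 0, 3 | 3, 0 => uv_mono a (-2) 0 0 2 0 * A * P
  | 0, 4 | 4, 0 => uv_mono a (-2) 0 2 2 0 * B * P
  | 1, 1 => uv_mono a 2 0 0 1 0 * B * B + uv_mono a 3 2 0 0 4 * P * P
  | 1, 4 | 4, 1 => uv_mono a 4 0 1 1 0 * B * P
  | 2, 2 => uv_mono a 2 0 0 1 0 * N * N
  | 2, 3 | 3, 2 => uv_mono a 2 0 0 1 0 * N * P
  | 3, 3 => uv_mono a 2 0 0 1 0 * P * P
  | 4, 4 => uv_mono a 2 0 2 1 0 * P * P
  | _, _ => 0
  end.

Ltac coord_cases j := destruct j as [|[|[|[|[|j]]]]]; [..| exfalso; lia].

Ltac nonzero := repeat first
  [ exact I | split | apply Rmult_integral_contrapositive_currified | apply pow_nonzero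
  | assumption | lra ].

Lemma is_derive_qform a j m n p : a 0%nat <> 0 -> a 1%nat <> 0 -> (j < 5)%nat ->
  is_derive (fun s => qform (upd a j s) m n p) (a j) (dqform j a m n p).
Proof.
  intros Hu Hv Hj. unfold qform, dqform, uv_mono, linA, linB, upd.
  coord_cases j; cbn [Nat.eqb]; auto_derive; try (field; nonzero); nonzero.
Qed.

Lemma is_derive_dqform a i j m n p : a 0%nat <> 0 -> a 1%nat <> 0 -> (i < 5)%nat -> (j < 5)%nat ->
  is_derive (fun s => dqform j (upd a i s) m n p) (a i) (d2qform i j a m n p).
Proof.
  intros Hu Hv Hi Hj. unfold dqform, d2qform, uv_mono, linA, linB, upd.
  coord_cases i; coord_cases j; cbn [Nat.eqb]; auto_derive; try (field; nonzero); nonzero.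
Qed.

Lemma continuous_d2qform a i j m n p : a 0%nat <> 0 -> a 1%nat <> 0 -> (i < 5)%nat -> (j < 5)%nat ->
  continuous (fun s => d2qform i j (upd a i s) m n p) (a i).
Proof.
  intros Hu Hv Hi Hj. apply (ex_derive_continuous (fun s => d2qform i j (upd a i s) m n p)).
  unfold d2qform, uv_mono, linA, linB, upd.
  coord_cases i; coord_cases j; cbn [Nat.eqb]; auto_derive; nonzero.
Qed.

Lemma Rabs_plus_le x y b1 b2 : Rabs x <= b1 -> Rabs y <= b2 -> Rabs (x + y) <= b1 + b2.
Proof. intros. eapply Rle_trans; [apply Rabs_triang | lra]. Qed.

Ltac bound_uv_terms Ha m n p :=
  repeat apply Rabs_plus_le; apply (uv_term_bound _ _ _ _ _ _ _ _ m n p);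
  first [ exact Ha | apply Rabs_le; lra | simpl; lia
        | apply linA_bound, Ha | apply linB_bound, Ha | apply Rabs_n_le_norm1 | apply Rabs_p_le_norm1 ].

Lemma dqform_bound a j m n p : near_D3 a -> (j < 5)%nat -> Rabs (dqform j a m n p) <= 72 * sqnorm m n p.
Proof.
  intros Ha Hj. pose proof (sqnorm_nonneg m n p). unfold dqform.
  coord_cases j; cbv beta iota zeta; (eapply Rle_trans; [bound_uv_terms Ha m n p | lra]).
Qed.

Lemma d2qform_bound a i j m n p : near_D3 a -> (i < 5)%nat -> (j < 5)%nat ->
  Rabs (d2qform i j a m n p) <= 72 * sqnorm m n p.
Proof.
  intros Ha Hi Hj. pose proof (sqnorm_nonneg m n p). unfold d2qform.
  coord_cases i; coord_cases j; cbv beta iota zeta;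
    first [rewrite Rabs_R0; lra | eapply Rle_trans; [bound_uv_terms Ha m n p | lra]].
Qed.

Lemma sum3_sq_le x y z : (x + y + z) ^ 2 <= 3 * (x ^ 2 + y ^ 2 + z ^ 2).
Proof.
  pose proof (pow2_ge_0 (x - y)). pose proof (pow2_ge_0 (y - z)). pose proof (pow2_ge_0 (x - z)). nra.
Qed.

Lemma pow2_scale_le c t b : c ^ 2 <= b -> (c * t) ^ 2 <= b * t ^ 2.
Proof. intros H. rewrite Rpow_mult_distr. apply Rmult_le_compat_r; [apply pow2_ge_0 | exact H]. Qed.

(* Invert the triangular change of variables [(m, n, p) |-> (A, B, p)]. *)
Lemma sqnorm_le_lin a m n p : near_D3 a ->
  sqnorm m n p <= 4 * (linA a m n p ^ 2 + linB a m n p ^ 2 + IZR p ^ 2).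
Proof.
  intros Ha. pose proof (near_D3_bounds a Ha) as (_ & _ & [Hx1 Hx2] & [Hy1 Hy2] & [Hz1 Hz2]).
  unfold sqnorm. set (x := a 2%nat) in *. set (y := a 3%nat) in *. set (z := a 4%nat) in *.
  set (A := linA a m n p). set (B := linB a m n p). set (P := IZR p).
  assert (EN : IZR n = B - z * P) by (unfold B, linB; fold z P; ring).
  assert (EM : IZR m = A - x * B + (x * z - y) * P) by (unfold A, B, linA, linB; fold x y z P; ring).
  assert (HN : IZR n ^ 2 <= 2 * B ^ 2 + 2 * (z * P) ^ 2)
    by (rewrite EN; pose proof (pow2_ge_0 (B + z * P)); nra).
  assert (HM : IZR m ^ 2 <= 3 * (A ^ 2 + (x * B) ^ 2 + ((x * z - y) * P) ^ 2)).
  { rewrite EM. replace ((x * B) ^ 2) with ((- (x * B)) ^ 2) by ring. apply sum3_sq_le. }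
  assert ((z * P) ^ 2 <= 9/25 * P ^ 2) by (apply pow2_scale_le; nra).
  assert ((x * B) ^ 2 <= 1/100 * B ^ 2) by (apply pow2_scale_le; nra).
  assert (((x * z - y) * P) ^ 2 <= 1/2 * P ^ 2).
  { apply pow2_scale_le. assert (-7/10 <= x * z - y <= 0) by nra. nra. }
  nra.
Qed.

Lemma qform_lower a m n p : near_D3 a -> sqnorm m n p / 15 <= qform a m n p.
Proof.
  intros Ha. pose proof (sqnorm_le_lin a m n p Ha) as HAB.
  pose proof (near_D3_bounds a Ha) as ([Hu1 Hu2] & [Hv1 Hv2] & _).
  unfold qform. set (u := a 0%nat) in *. set (v := a 1%nat) in *.
  set (A := linA a m n p) in *. set (B := linB a m n p) in *. set (P := IZR p) in *.
  assert (Hr : 3/10 <= u ^ 3 / (2 * v ^ 2)).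
  { apply Rmult_le_reg_r with (2 * v ^ 2); [nra|].
    replace (u ^ 3 / (2 * v ^ 2) * (2 * v ^ 2)) with (u ^ 3) by (field; lra). nra. }
  assert (Hiu : 10/11 <= / u) by (apply Rle_trans with (/ (11/10)); [lra | apply Rinv_le_contravar; lra]).
  assert (HE : 3/40 * sqnorm m n p <= A ^ 2 + v ^ 2 * B ^ 2 + u ^ 3 / (2 * v ^ 2) * P ^ 2).
  { assert (81/100 <= v ^ 2) by nra.
    pose proof (pow2_ge_0 A). pose proof (pow2_ge_0 B). pose proof (pow2_ge_0 P). nra. }
  pose proof (sqnorm_nonneg m n p).
  apply Rle_trans with (10/11 * (3/40 * sqnorm m n p)); [lra|].
  apply Rmult_le_compat; lra.
Qed.

(** * Derivatives of E_f near the FCC point *)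

Definition unif_decaying (F : (nat -> R) -> Z -> Z -> Z -> R) : Prop :=
  exists c d N0, forall a, near_D3 a -> decay_bound (F a) c d N0.

Lemma unif_decaying_ext F1 F2 : (forall a m n p, F1 a m n p = F2 a m n p) ->
  unif_decaying F1 -> unif_decaying F2.
Proof. intros E [c [d [N0 H]]]. exists c, d, N0. intros a Ha. eapply decay_bound_ext; [apply E | auto]. Qed.

Lemma unif_decaying_plus F1 F2 : unif_decaying F1 -> unif_decaying F2 ->
  unif_decaying (fun a m n p => F1 a m n p + F2 a m n p).
Proof.
  intros [c1 [d1 [N1 H1]]] [c2 [d2 [N2 H2]]].
  exists (c1 + c2), (Rmin d1 d2), (Nat.max N1 N2). intros a Ha.
  pose proof (H1 a Ha) as [_ [Hd1 _]]. pose proof (H2 a Ha) as [_ [Hd2 _]].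
  apply decay_bound_plus;
    (eapply decay_bound_weaken; [eauto | lra | split; [apply Rmin_glb_lt; lra|] | lia]);
    [apply Rmin_l | apply Rmin_r].
Qed.

Lemma is_derive_lattice_sum_coord (F F' : (nat -> R) -> Z -> Z -> Z -> R) j b :
  (j < 5)%nat -> near_D3 b -> unif_decaying F -> unif_decaying F' ->
  (forall a m n p, near_D3 a -> is_origin (m, n, p) = false ->
     is_derive (fun t => F (upd a j t) m n p) (a j) (F' a m n p)) ->
  (forall a m n p, near_D3 a -> is_origin (m, n, p) = false ->
     continuous (fun t => F' (upd a j t) m n p) (a j)) ->
  is_derive (fun t => lattice_sum (F (upd b j t))) (b j) (lattice_sum (F' b)).
Proof.
  intros Hj Hb [c [d [N0 HF]]] [c' [d' [N0' HF']]] Hder Hcont.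
  set (lo := D3pt j - 1/10). set (hi := D3pt j + 1/10).
  assert (Hupd : forall s, lo < s < hi -> near_D3 (upd b j s))
    by (intros s Hs; apply near_D3_upd; [exact Hb | apply Rabs_def1; unfold lo, hi in Hs; lra]).
  replace (lattice_sum (F' b)) with (lattice_sum (F' (upd b j (b j)))) by (rewrite upd_same; reflexivity).
  apply (is_derive_lattice_sum (fun s => F (upd b j s)) (fun s => F' (upd b j s)) lo hi c d c' d' N0 N0').
  - intros s Hs. apply HF, Hupd, Hs.
  - intros s Hs. apply HF', Hupd, Hs.
  - intros s m n p Hs O. pose proof (Hder _ m n p (Hupd s Hs) O) as H. rewrite upd_eq in H.
    eapply is_derive_ext; [|exact H]. intros t. cbv beta. rewrite upd_upd. reflexivity.
  - intros s m n p Hs O. pose proof (Hcont _ m n p (Hupd s Hs) O) as H. rewrite upd_eq in H.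
    eapply continuous_ext; [|exact H]. intros t. cbv beta. rewrite upd_upd. reflexivity.
  - pose proof (Hb j Hj) as H. apply Rabs_def2 in H. unfold lo, hi. lra.
Qed.

Section EnergyDerivatives.

Variables (V : R) (f : R -> R).
Hypothesis Hf : in_F f.

Definition Ef_summand (a : nat -> R) (m n p : Z) : R := f (Cvol V * qform a m n p).

Definition Ef_summand_d (j : nat) (a : nat -> R) (m n p : Z) : R :=
  Cvol V * dqform j a m n p * Derive f (Cvol V * qform a m n p).

Definition Ef_summand_dd (i j : nat) (a : nat -> R) (m n p : Z) : R :=
  Cvol V ^ 2 * dqform i a m n p * dqform j a m n p * Derive (Derive f) (Cvol V * qform a m n p)
  + Cvol V * d2qform i j a m n p * Derive f (Cvol V * qform a m n p).

(* [Rpower] is positive even for nonpositive bases. *)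
Lemma Cvol_pos : 0 < Cvol V.
Proof. unfold Cvol. apply Rmult_lt_0_compat; apply Rpower_pos. Qed.

Lemma Cqform_pos a m n p : near_D3 a -> is_origin (m, n, p) = false -> 0 < Cvol V * qform a m n p.
Proof.
  intros Ha O. pose proof Cvol_pos. pose proof (qform_lower a m n p Ha). pose proof (sqnorm_ge1 m n p O).
  apply Rmult_lt_0_compat; lra.
Qed.

Lemma unif_decaying_comp (phi : R -> R) e (P : (nat -> R) -> Z -> Z -> Z -> R) K :
  decay phi e -> 0 <= K -> (forall a m n p, near_D3 a -> Rabs (P a m n p) <= K * sqnorm m n p ^ e) ->
  unif_decaying (fun a m n p => P a m n p * phi (Cvol V * qform a m n p)).
Proof.
  intros (eta & M & r0 & Heta & Hr0 & Hphi) HK HP. pose proof Cvol_pos as HC.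
  set (lam := Cvol V / 15).
  destruct (INR_unbounded (r0 / lam)) as [N HN].
  exists (K * M * Rpower lam (- (3/2 + INR e + eta))), (2 * eta), (S N). intros a Ha.
  apply (decay_bound_comp phi e M eta r0 Heta Hr0 Hphi); [unfold lam; lra | exact HK | lia | | | auto].
  - assert (Hlam : 0 < lam) by (unfold lam; lra).
    apply Rmult_lt_compat_l with (r := lam) in HN; [|exact Hlam].
    replace (lam * (r0 / lam)) with r0 in HN by (field; lra). rewrite S_INR. nra.
  - intros m n p. pose proof (qform_lower a m n p Ha). unfold lam. nra.
Qed.

Lemma Ef_summand_decay : unif_decaying Ef_summand.
Proof.
  destruct Hf as (_ & Hd0 & _).
  apply (unif_decaying_ext (fun a m n p => 1 * f (Cvol V * qform a m n p))).
  { intros; unfold Ef_summand; ring. }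
  apply (unif_decaying_comp f 0 (fun _ _ _ _ => 1) 1 Hd0); [lra|]. intros. rewrite Rabs_R1. simpl. lra.
Qed.

Lemma Ef_summand_d_decay j : (j < 5)%nat -> unif_decaying (Ef_summand_d j).
Proof.
  intros Hj. destruct Hf as (_ & _ & Hd1 & _). pose proof Cvol_pos.
  apply (unif_decaying_comp (Derive f) 1 (fun a m n p => Cvol V * dqform j a m n p) (72 * Cvol V) Hd1);
    [lra|].
  intros a m n p Ha. rewrite Rabs_mult, Rabs_pos_eq, pow_1 by lra.
  pose proof (dqform_bound a j m n p Ha Hj). nra.
Qed.

Lemma Ef_summand_dd_decay i j : (i < 5)%nat -> (j < 5)%nat -> unif_decaying (Ef_summand_dd i j).
Proof.
  intros Hi Hj. destruct Hf as (_ & _ & Hd1 & Hd2). pose proof Cvol_pos.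
  apply unif_decaying_plus.
  - apply (unif_decaying_comp (Derive (Derive f)) 2
      (fun a m n p => Cvol V ^ 2 * dqform i a m n p * dqform j a m n p) ((72 * Cvol V) ^ 2) Hd2); [nra|].
    intros a m n p Ha. rewrite !Rabs_mult, (Rabs_pos_eq (_ ^ 2)) by nra.
    pose proof (dqform_bound a i m n p Ha Hi). pose proof (dqform_bound a j m n p Ha Hj).
    pose proof (Rabs_pos (dqform i a m n p)). pose proof (Rabs_pos (dqform j a m n p)).
    replace ((72 * Cvol V) ^ 2 * sqnorm m n p ^ 2)
      with (Cvol V ^ 2 * (72 * sqnorm m n p) * (72 * sqnorm m n p)) by ring.
    apply Rmult_le_compat; try apply Rmult_le_compat_l; try apply Rmult_le_pos; nra.
  - apply (unif_decaying_comp (Derive f) 1 (fun a m n p => Cvol V * d2qform i j a m n p) (72 * Cvol V) Hd1);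
      [lra|].
    intros a m n p Ha. rewrite Rabs_mult, Rabs_pos_eq, pow_1 by lra.
    pose proof (d2qform_bound a i j m n p Ha Hi Hj). nra.
Qed.

Lemma is_derive_Cqform a j m n p : near_D3 a -> (j < 5)%nat ->
  is_derive (fun t => Cvol V * qform (upd a j t) m n p) (a j) (Cvol V * dqform j a m n p).
Proof.
  intros Ha Hj. destruct (near_D3_nonzero a Ha) as [Hu Hv].
  apply is_derive_scal, is_derive_qform; assumption.
Qed.

Lemma continuous_comp_Cqform (phi : R -> R) a j m n p : near_D3 a -> (j < 5)%nat ->
  continuous phi (Cvol V * qform a m n p) ->
  continuous (fun t => phi (Cvol V * qform (upd a j t) m n p)) (a j).
Proof.
  intros Ha Hj Hphi. apply (continuous_comp (fun t => Cvol V * qform (upd a j t) m n p) phi).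
  - exact (ex_derive_continuous _ _ (ex_intro _ _ (is_derive_Cqform a j m n p Ha Hj))).
  - rewrite upd_same. exact Hphi.
Qed.

Ltac split_continuous := repeat
  match goal with
  | |- continuous (fun t => @?g t + @?h t) _ => apply (continuous_plus g h)
  | |- continuous (fun t => @?g t * @?h t) _ => apply (continuous_mult g h)
  end.

Lemma is_derive_value (g : R -> R) x l l' : is_derive g x l -> l = l' -> is_derive g x l'.
Proof. intros H <-. exact H. Qed.

Lemma is_derive_Ef_summand a j m n p : near_D3 a -> (j < 5)%nat -> is_origin (m, n, p) = false ->
  is_derive (fun t => Ef_summand (upd a j t) m n p) (a j) (Ef_summand_d j a m n p).
Proof.
  intros Ha Hj O. destruct Hf as (Hsmooth & _).
  assert (Hf1 : is_derive f (Cvol V * qform (upd a j (a j)) m n p) (Derive f (Cvol V * qform a m n p)))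
    by (rewrite upd_same; apply Derive_correct, Hsmooth, Cqform_pos; assumption).
  eapply is_derive_value; [exact (is_derive_comp _ _ _ _ _ Hf1 (is_derive_Cqform a j m n p Ha Hj))|].
  reflexivity.
Qed.

Lemma is_derive_Ef_summand_d a i j m n p : near_D3 a -> (i < 5)%nat -> (j < 5)%nat ->
  is_origin (m, n, p) = false ->
  is_derive (fun t => Ef_summand_d j (upd a i t) m n p) (a i) (Ef_summand_dd i j a m n p).
Proof.
  intros Ha Hi Hj O. destruct Hf as (Hsmooth & _). destruct (near_D3_nonzero a Ha) as [Hu Hv].
  assert (Hf2 : is_derive (Derive f) (Cvol V * qform (upd a i (a i)) m n p)
                  (Derive (Derive f) (Cvol V * qform a m n p)))
    by (rewrite upd_same; apply Derive_correct, Hsmooth, Cqform_pos; assumption).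
  pose proof (is_derive_comp _ _ _ _ _ Hf2 (is_derive_Cqform a i m n p Ha Hi)) as Hcomp.
  pose proof (is_derive_scal _ _ (Cvol V) _ (is_derive_dqform a i j m n p Hu Hv Hi Hj)) as Hdq.
  eapply is_derive_value; [apply (is_derive_mult _ _ _ _ _ Hdq Hcomp); intros; apply Rmult_comm|].
  cbv beta. rewrite upd_same. unfold Ef_summand_dd, plus, mult, scal. simpl. unfold mult. simpl. ring.
Qed.

Lemma continuous_Ef_summand_d a j m n p : near_D3 a -> (j < 5)%nat -> is_origin (m, n, p) = false ->
  continuous (fun t => Ef_summand_d j (upd a j t) m n p) (a j).
Proof.
  intros Ha Hj O. destruct Hf as (Hsmooth & _). destruct (near_D3_nonzero a Ha) as [Hu Hv].
  unfold Ef_summand_d. split_continuous.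
  - apply continuous_const.
  - exact (ex_derive_continuous _ _ (ex_intro _ _ (is_derive_dqform a j j m n p Hu Hv Hj Hj))).
  - apply continuous_comp_Cqform; [assumption | assumption |].
    apply (ex_derive_continuous (Derive f)), Hsmooth, Cqform_pos; assumption.
Qed.

Lemma continuous_Ef_summand_dd a i j m n p : near_D3 a -> (i < 5)%nat -> (j < 5)%nat ->
  is_origin (m, n, p) = false ->
  continuous (fun t => Ef_summand_dd i j (upd a i t) m n p) (a i).
Proof.
  intros Ha Hi Hj O. destruct Hf as (Hsmooth & _). destruct (near_D3_nonzero a Ha) as [Hu Hv].
  pose proof (Cqform_pos a m n p Ha O) as Hq.
  assert (Hdq : forall k, (k < 5)%nat -> continuous (fun t => dqform k (upd a i t) m n p) (a i))
    by (intros k Hk;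
        exact (ex_derive_continuous _ _ (ex_intro _ _ (is_derive_dqform a i k m n p Hu Hv Hi Hk)))).
  unfold Ef_summand_dd. split_continuous.
  - apply continuous_const.
  - apply Hdq, Hi.
  - apply Hdq, Hj.
  - apply continuous_comp_Cqform; [assumption | assumption | apply Hsmooth, Hq].
  - apply continuous_const.
  - apply continuous_d2qform; assumption.
  - apply continuous_comp_Cqform; [assumption | assumption |].
    apply (ex_derive_continuous (Derive f)), Hsmooth, Hq.
Qed.

Lemma Ef_lattice_sum a : Ef V f a = lattice_sum (Ef_summand a).
Proof. apply lattice_sum_ext. intros m n p _. unfold Ef_summand. rewrite QL_qform. reflexivity. Qed.

Lemma is_derive_Ef b j : near_D3 b -> (j < 5)%nat ->
  is_derive (fun t => Ef V f (upd b j t)) (b j) (lattice_sum (Ef_summand_d j b)).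
Proof.
  intros Hb Hj. apply (is_derive_ext (fun t => lattice_sum (Ef_summand (upd b j t)))).
  { intros t. symmetry. apply Ef_lattice_sum. }
  apply is_derive_lattice_sum_coord; auto using Ef_summand_decay, Ef_summand_d_decay.
  - intros. apply is_derive_Ef_summand; assumption.
  - intros. apply continuous_Ef_summand_d; assumption.
Qed.

Lemma is_derive_lattice_sum_Ef_summand_d a i j : near_D3 a -> (i < 5)%nat -> (j < 5)%nat ->
  is_derive (fun t => lattice_sum (Ef_summand_d j (upd a i t))) (a i) (lattice_sum (Ef_summand_dd i j a)).
Proof.
  intros Ha Hi Hj.
  apply is_derive_lattice_sum_coord; auto using Ef_summand_d_decay, Ef_summand_dd_decay.
  - intros. apply is_derive_Ef_summand_d; assumption.
  - intros. apply continuous_Ef_summand_dd; assumption.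
Qed.

Lemma second_partial_Ef i j : (i < 5)%nat -> (j < 5)%nat ->
  second_partial (Ef V f) D3pt i j (lattice_sum (Ef_summand_dd i j D3pt)).
Proof.
  intros Hi Hj. unfold second_partial.
  apply (is_derive_ext_loc (fun t => lattice_sum (Ef_summand_d j (upd D3pt i t)))).
  - set (I := fun t => D3pt i - 1/10 < t < D3pt i + 1/10).
    apply (locally_open I); [apply open_and; [apply open_gt | apply open_lt] | | unfold I; lra].
    intros t Ht. symmetry. apply is_derive_unique, is_derive_Ef; [|exact Hj].
    apply near_D3_upd; [apply near_D3_D3pt | apply Rabs_def1; unfold I in Ht; lra].
  - apply is_derive_lattice_sum_Ef_summand_d; [apply near_D3_D3pt | assumption | assumption].
Qed.

End EnergyDerivatives.

(** * The Hessian at the FCC point *)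

(* A group of twelve automorphisms of [Z^3] fixing both [Rq] and [Tq]. *)
Definition D3_symmetries : list (pt -> pt) :=
  map (fun M k => let '(m, n, p) := k in M m n p)
  [ (fun m n p => (m, n, p));
    (fun m n p => (n + p, n, - m - n - p));
    (fun m n p => (n + p, m + p, - p));
    (fun m n p => (- n, - n - p, m + n + p));
    (fun m n p => (m, m + p, - m - n - p));
    (fun m n p => (- n, - m, - p));
    (fun m n p => (- m - p, - m, m + n + p));
    (fun m n p => (- n, m + p, - m + n));
    (fun m n p => (- m - p, n, m - n));
    (fun m n p => (n + p, - m, m - n));
    (fun m n p => (- m - p, - n - p, p));
    (fun m n p => (m, - n - p, - m + n)) ]%Z.

Lemma pt_eq (a b c a' b' c' : Z) : a = a' -> b = b' -> c = c' -> (a, b, c) = (a', b', c').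
Proof. intros -> -> ->. reflexivity. Qed.

Ltac check_inverse :=
  split; [lia|]; repeat split; intros [[m n] p]; cbn -[Z.mul]; first [apply pt_eq; lia | lia].

Ltac find_inverse_in G :=
  lazymatch G with
  | ?B :: ?G' => first [exists B, 3%nat; check_inverse | find_inverse_in G']
  end.

Lemma D3_symmetries_automorphisms : Forall lattice_automorphism D3_symmetries.
Proof.
  apply Forall_forall. intros A HA. unfold lattice_automorphism.
  let G := eval cbn [D3_symmetries map] in D3_symmetries in
  cbn [D3_symmetries map In] in HA; repeat destruct HA as [<- | HA]; [find_inverse_in G ..|contradiction].
Qed.

Lemma D3_symmetries_Rq : Forall (fun A => forall k, on_pt Rq (A k) = on_pt Rq k) D3_symmetries.
Proof.
  repeat constructor; intros [[m n] p]; unfold Rq; cbn;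
    rewrite ?plus_IZR, ?minus_IZR, ?opp_IZR; ring.
Qed.

Lemma qform_D3 m n p : qform D3pt m n p = Rq m n p.
Proof. unfold qform, linA, linB, Rq. cbn [D3pt]. field. Qed.

Lemma Rq_bound m n p : Rabs (Rq m n p) <= 2 * sqnorm m n p.
Proof.
  unfold Rq, sqnorm. set (M := IZR m). set (N := IZR n). set (P := IZR p).
  apply Rabs_le. split.
  - pose proof (pow2_ge_0 (M + P / 2)). pose proof (pow2_ge_0 (N + P / 2)). nra.
  - pose proof (pow2_ge_0 (M - P / 2)). pose proof (pow2_ge_0 (N - P / 2)). nra.
Qed.

Lemma Tq_bound m n p : Rabs (Tq m n p) <= 2 * sqnorm m n p ^ 2.
Proof.
  unfold Tq, sqnorm. set (M := IZR m). set (N := IZR n). set (P := IZR p).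
  replace (M * N * (M + P) * (N + P)) with ((M * N) * ((M + P) * (N + P))) by ring.
  rewrite Rabs_mult.
  assert (H1 : Rabs (M * N) <= (M ^ 2 + N ^ 2 + P ^ 2) / 2).
  { rewrite Rabs_mult. pose proof (pow2_ge_0 (Rabs M - Rabs N)). pose proof (pow2_ge_0 P).
    rewrite <- (Rabs_pow2 M), <- (Rabs_pow2 N). nra. }
  assert (H2 : Rabs ((M + P) * (N + P)) <= 2 * (M ^ 2 + N ^ 2 + P ^ 2)).
  { rewrite Rabs_mult. pose proof (pow2_ge_0 (Rabs (M + P) - Rabs (N + P))).
    assert (Rabs (M + P) ^ 2 + Rabs (N + P) ^ 2 <= 4 * (M ^ 2 + N ^ 2 + P ^ 2)).
    { rewrite !Rabs_pow2. pose proof (pow2_ge_0 (M - P)). pose proof (pow2_ge_0 (N - P)). nra. }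
    nra. }
  pose proof (Rabs_pos (M * N)). pose proof (Rabs_pos ((M + P) * (N + P))).
  apply Rle_trans with ((M ^ 2 + N ^ 2 + P ^ 2) / 2 * (2 * (M ^ 2 + N ^ 2 + P ^ 2))); [|nra].
  apply Rmult_le_compat; assumption.
Qed.

Lemma decaying_at_D3 V (phi : R -> R) e (P : Z -> Z -> Z -> R) K :
  decay phi e -> 0 <= K -> (forall m n p, Rabs (P m n p) <= K * sqnorm m n p ^ e) ->
  decaying (fun m n p => P m n p * phi (Cvol V * Rq m n p)).
Proof.
  intros Hphi HK HP. destruct (unif_decaying_comp V phi e (fun _ => P) K Hphi HK) as [c [d [N0 H]]];
    [intros; apply HP|].
  exists c, d, N0. eapply decay_bound_ext; [|apply H, near_D3_D3pt].
  intros. cbv beta. rewrite qform_D3. reflexivity.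
Qed.

Definition D3_S1 V f := lattice_sum (fun m n p => Rq m n p ^ 2 * Derive (Derive f) (Cvol V * Rq m n p)).
Definition D3_S2 V f := lattice_sum (fun m n p => Rq m n p * Derive f (Cvol V * Rq m n p)).
Definition D3_S3 V f := lattice_sum (fun m n p => Tq m n p * Derive (Derive f) (Cvol V * Rq m n p)).

Definition D3_average (P : Z -> Z -> Z -> R) (m n p : Z) : R := / 12 * orbit_sum D3_symmetries P m n p.

Lemma lattice_sum_average_D3 (P W : Z -> Z -> Z -> R) (h : R -> R) :
  decaying (fun m n p => P m n p * h (Rq m n p)) ->
  (forall m n p, D3_average P m n p = W m n p) ->
  lattice_sum (fun m n p => P m n p * h (Rq m n p)) = lattice_sum (fun m n p => W m n p * h (Rq m n p)).
Proof.
  intros H HW. rewrite (lattice_sum_orbit_average D3_symmetries Rq P h);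
    auto using D3_symmetries_automorphisms, D3_symmetries_Rq; [|discriminate].
  apply lattice_sum_ext. intros m n p _. rewrite <- HW. unfold D3_average. cbn [length D3_symmetries map].
  do 3 f_equal. simpl. ring.
Qed.

Lemma decaying_D3_sums V f : in_F f ->
  decaying (fun m n p => Rq m n p ^ 2 * Derive (Derive f) (Cvol V * Rq m n p)) /\
  decaying (fun m n p => Rq m n p * Derive f (Cvol V * Rq m n p)) /\
  decaying (fun m n p => Tq m n p * Derive (Derive f) (Cvol V * Rq m n p)).
Proof.
  intros (_ & _ & Hd1 & Hd2). repeat split.
  - apply (decaying_at_D3 V _ 2 _ 4); [exact Hd2 | lra |]. intros m n p.
    rewrite <- RPow_abs. pose proof (Rq_bound m n p). pose proof (Rabs_pos (Rq m n p)).
    replace (4 * sqnorm m n p ^ 2) with ((2 * sqnorm m n p) ^ 2) by ring. apply pow_incr. lra.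
  - apply (decaying_at_D3 V _ 1 _ 2); [exact Hd1 | lra |]. intros m n p. rewrite pow_1. apply Rq_bound.
  - apply (decaying_at_D3 V _ 2 _ 2); [exact Hd2 | lra | apply Tq_bound].
Qed.

Lemma lattice_sum_Ef_summand_dd_D3 V f i j al be ga : in_F f -> (i < 5)%nat -> (j < 5)%nat ->
  (forall m n p, D3_average (fun m n p => dqform i D3pt m n p * dqform j D3pt m n p) m n p
                 = al * Rq m n p ^ 2 + be * Tq m n p) ->
  (forall m n p, D3_average (d2qform i j D3pt) m n p = ga * Rq m n p) ->
  lattice_sum (Ef_summand_dd V f i j D3pt) =
  Cvol V ^ 2 * (al * D3_S1 V f + be * D3_S3 V f) + Cvol V * (ga * D3_S2 V f).
Proof.
  intros Hf Hi Hj Hdq Hd2q. pose proof (decaying_D3_sums V f Hf) as (DR2 & DR & DT).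
  destruct Hf as (_ & _ & Hd1 & Hd2).
  set (f1 := fun r => Derive f (Cvol V * r)). set (f2 := fun r => Derive (Derive f) (Cvol V * r)).
  assert (D1 : decaying (fun m n p => (dqform i D3pt m n p * dqform j D3pt m n p) * f2 (Rq m n p))).
  { apply (decaying_at_D3 V _ 2 _ (72 ^ 2)); [exact Hd2 | nra |]. intros m n p.
    pose proof (dqform_bound D3pt i m n p near_D3_D3pt Hi).
    pose proof (dqform_bound D3pt j m n p near_D3_D3pt Hj).
    rewrite Rabs_mult.
    replace (72 ^ 2 * sqnorm m n p ^ 2) with ((72 * sqnorm m n p) * (72 * sqnorm m n p)) by ring.
    apply Rmult_le_compat; auto using Rabs_pos. }
  assert (D2 : decaying (fun m n p => d2qform i j D3pt m n p * f1 (Rq m n p))).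
  { apply (decaying_at_D3 V _ 1 _ 72); [exact Hd1 | lra |]. intros m n p. rewrite pow_1.
    apply d2qform_bound; auto using near_D3_D3pt. }
  transitivity (Cvol V ^ 2 * lattice_sum (fun m n p =>
                  (dqform i D3pt m n p * dqform j D3pt m n p) * f2 (Rq m n p))
                + Cvol V * lattice_sum (fun m n p => d2qform i j D3pt m n p * f1 (Rq m n p))).
  { rewrite <- !lattice_sum_scal, <- lattice_sum_plus by auto using decaying_scal.
    apply lattice_sum_ext. intros. unfold Ef_summand_dd, f1, f2. rewrite qform_D3. ring. }
  rewrite (lattice_sum_average_D3 _ _ f2 D1 Hdq), (lattice_sum_average_D3 _ _ f1 D2 Hd2q).
  rewrite (lattice_sum_ext _ (fun m n p =>
             al * (Rq m n p ^ 2 * f2 (Rq m n p)) + be * (Tq m n p * f2 (Rq m n p)))) by (intros; ring).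
  rewrite (lattice_sum_ext (fun m n p => ga * Rq m n p * f1 (Rq m n p))
             (fun m n p => ga * (Rq m n p * f1 (Rq m n p)))) by (intros; ring).
  rewrite lattice_sum_plus, !lattice_sum_scal by auto using decaying_scal.
  reflexivity.
Qed.

Definition D3_hessian_coeffs (i j : nat) : R * R * R :=
  match i, j with
  | 0, 0 => (1/2, 6, 2)
  | 0, 1 | 1, 0 => (-1/2, -6, -2)
  | 1, 1 => (5/6, 14/3, 8/3)
  | 2, 2 => (1/3, 4/3, 1)
  | 2, 3 | 3, 2 => (-1/3, 4/3, -2/3)
  | 3, 3 | 4, 4 => (2/3, -8/3, 4/3)
  | _, _ => (0, 0, 0)
  end.

Ltac D3_orbit_identity :=
  intros m n p; unfold D3_average, orbit_sum, reindex; cbn [D3_symmetries map fold_right on_pt];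
  unfold dqform, d2qform, uv_mono, linA, linB, Rq, Tq; cbn [D3pt];
  rewrite ?plus_IZR, ?minus_IZR, ?opp_IZR; field.

Lemma D3_orbit_identities i j : (i < 5)%nat -> (j < 5)%nat ->
  let '(al, be, ga) := D3_hessian_coeffs i j in
  (forall m n p, D3_average (fun m n p => dqform i D3pt m n p * dqform j D3pt m n p) m n p
                 = al * Rq m n p ^ 2 + be * Tq m n p) /\
  (forall m n p, D3_average (d2qform i j D3pt) m n p = ga * Rq m n p).
Proof. intros Hi Hj. coord_cases i; coord_cases j; split; D3_orbit_identity. Qed.

Lemma second_partial_Ef_D3 V f i j : in_F f -> (i < 5)%nat -> (j < 5)%nat ->
  let '(al, be, ga) := D3_hessian_coeffs i j in
  second_partial (Ef V f) D3pt i j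
    (Cvol V ^ 2 * (al * D3_S1 V f + be * D3_S3 V f) + Cvol V * (ga * D3_S2 V f)).
Proof.
  intros Hf Hi Hj. pose proof (D3_orbit_identities i j Hi Hj) as Hid.
  destruct (D3_hessian_coeffs i j) as [[al be] ga]. destruct Hid as [H1 H2].
  rewrite <- (lattice_sum_Ef_summand_dd_D3 V f i j al be ga Hf Hi Hj H1 H2).
  apply second_partial_Ef; assumption.
Qed.

Lemma second_partial_value (F : (nat -> R) -> R) a i j v v' :
  second_partial F a i j v -> v = v' -> second_partial F a i j v'.
Proof. intros H <-. exact H. Qed.

Ltac D3_entry Hf :=
  match goal with
  | |- second_partial _ _ ?i ?j _ =>
      eapply second_partial_value;
      [ exact (second_partial_Ef_D3 _ _ i j Hf ltac:(lia) ltac:(lia))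
      | unfold D3_S1, D3_S2, D3_S3; cbn; field ]
  end.

Theorem proposition4p2 (V : R) (f : R -> R) (hV : 0 < V) (hf : in_F f) :
  let C : R := Cvol V in
  let E : (nat -> R) -> R := Ef V f in
  let S1 : R := lattice_sum (fun m n p => Rq m n p ^ 2 * Derive (Derive f) (C * Rq m n p)) in
  let S2 : R := lattice_sum (fun m n p => Rq m n p * Derive f (C * Rq m n p)) in
  let S3 : R := lattice_sum (fun m n p => Tq m n p * Derive (Derive f) (C * Rq m n p)) in
  second_partial E D3pt 0 0 (C ^ 2 / 2 * S1 + 2 * C * S2 + 6 * C ^ 2 * S3) /\
  second_partial E D3pt 1 1 (5 / 6 * C ^ 2 * S1 + 8 / 3 * C * S2 + 14 / 3 * C ^ 2 * S3) /\
  second_partial E D3pt 2 2 (C ^ 2 / 3 * S1 + C * S2 + 4 / 3 * C ^ 2 * S3) /\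
  second_partial E D3pt 3 3 (2 / 3 * C ^ 2 * S1 + 4 / 3 * C * S2 - 8 / 3 * C ^ 2 * S3) /\
  second_partial E D3pt 4 4 (2 / 3 * C ^ 2 * S1 + 4 / 3 * C * S2 - 8 / 3 * C ^ 2 * S3) /\
  (forall i j : nat, (i, j) = (0, 1)%nat \/ (i, j) = (1, 0)%nat ->
     second_partial E D3pt i j (- (C ^ 2 / 2) * S1 - 2 * C * S2 - 6 * C ^ 2 * S3)) /\
  (forall i j : nat, (i, j) = (2, 3)%nat \/ (i, j) = (3, 2)%nat ->
     second_partial E D3pt i j (- (C ^ 2 / 3) * S1 - 2 * C / 3 * S2 + 4 * C ^ 2 / 3 * S3)) /\
  (forall i j : nat,
     In (i, j) [(0,2); (0,3); (0,4); (1,2); (1,3); (1,4); (2,4); (3,4)]%nat \/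
     In (j, i) [(0,2); (0,3); (0,4); (1,2); (1,3); (1,4); (2,4); (3,4)]%nat ->
     second_partial E D3pt i j 0).
Proof.
  intros C E S1 S2 S3. subst C E S1 S2 S3.
  do 5 (split; [D3_entry hf|]).
  split; [intros i j [H | H]; injection H as -> ->; D3_entry hf|].
  split; [intros i j [H | H]; injection H as -> ->; D3_entry hf|].
  intros i j [H | H]; cbn in H; repeat destruct H as [H | H]; try (injection H as <- <-);
    solve [D3_entry hf | contradiction].
Qed.
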